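(* Let $K\in\mathbb{N}^*$. For every $p\in\mathbb{N}^*$ there exist $C>0$ and a quadratic form $Q_p$ such that for every real-valued $\mu\in C_c^\infty(0,1)$, $$A^p_K(\mu)=\langle(\mu^{(2p-1)})^2\varphi_1,\varphi_K\rangle+Q_p(\mu),\qquad |Q_p(\mu)|\le C\|\mu\|^2_{H^{2p-2}(0,1)}.$$
   Context: $\varphi_j=\sqrt2\sin(j\pi x)$, $\lambda_j=(j\pi)^2$, $\langle f,g\rangle=\int_0^1f\bar g$, $c_j=\langle\mu\varphi_1,\varphi_j\rangle\langle\mu\varphi_K,\varphi_j\rangle$, and $A^p_K(\mu)=(-1)^{p-1}\sum_{j\ge1}(\lambda_j-\frac{\lambda_1+\lambda_K}2)(\lambda_K-\lambda_j)^{p-1}(\lambda_j-\lambda_1)^{p-1}c_j$, viewed as a quadratic form in $\mu$. $H^0=L^2$. *)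

From Stdlib Require Import Reals.
From Coquelicot Require Import Coquelicot.
Open Scope R_scope.

Definition phi (j : nat) (x : R) : R := sqrt 2 * sin (INR j * PI * x).
Definition lam (j : nat) : R := (INR j * PI) ^ 2.

Definition ip (f g : R -> R) : R := RInt (fun x => f x * g x) 0 1.

(* real-valued C_c^infty(0,1) functions (extended by 0 to R) *)
Definition test_fun (mu : R -> R) : Prop :=
  (forall (n : nat) (x : R), ex_derive_n mu n x) /\
  exists a b : R, 0 < a /\ a < b /\ b < 1 /\
    forall x, (x < a \/ b < x) -> mu x = 0.

Definition c_coef (K : nat) (mu : R -> R) (j : nat) : R :=
  ip (fun x => mu x * phi 1 x) (phi j) * ip (fun x => mu x * phi K x) (phi j).

(* j-th term of the series defining A^p_K(mu) (meaningful for j >= 1) *)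
Definition A_term (K p : nat) (mu : R -> R) (j : nat) : R :=
  (-1) ^ (p - 1) *
  ((lam j - (lam 1 + lam K) / 2) * (lam K - lam j) ^ (p - 1)
     * (lam j - lam 1) ^ (p - 1) * c_coef K mu j).

Definition A_series (K p : nat) (mu : R -> R) (n : nat) : R := A_term K p mu (S n).
Definition A_Kp (K p : nat) (mu : R -> R) : R := Series (A_series K p mu).

Definition Hnorm2 (m : nat) (mu : R -> R) : R :=
  sum_f_R0 (fun k => RInt (fun x => (Derive_n mu k x) ^ 2) 0 1) m.

Definition bilinear_on (P : (R -> R) -> Prop) (B : (R -> R) -> (R -> R) -> R) : Prop :=
  forall (a : R) (f g h : R -> R), P f -> P g -> P h ->
    B (fun x => a * f x + g x) h = a * B f h + B g h /\
    B h (fun x => a * f x + g x) = a * B h f + B h g.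

Definition quadratic_form_on (P : (R -> R) -> Prop) (Q : (R -> R) -> R) : Prop :=
  exists B, bilinear_on P B /\ forall f, P f -> Q f = B f f.

From Stdlib Require Import Reals Lra Lia.
From Coquelicot Require Import Coquelicot.
Open Scope R_scope.

(* Writing the multiplier of [c_j] as a polynomial [P(lam_j)], monic of degree [2p-1], turns
   [A^p_K(mu)] into [sum_n a_n M_n + M_(2p-1)] with moments [M_n = sum_j lam_j^n c_j].
   Two integrations by parts per power of [lam_j] and Parseval's identity for the sine basis
   give [M_n = <(mu phi_1)^(n), (mu phi_K)^(n)>]. By the Leibniz rule the moments of order
   [n <= 2p-2] are bounded by [||mu||^2_(H^(2p-2))], and [M_(2p-1)] differs from
   [<(mu^(2p-1))^2 phi_1, phi_K>] by terms carrying at most one factor [mu^(2p-1)], which one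
   more integration by parts bounds by the same norm.

   Parseval's identity follows from the uniform convergence of
   [min(x,y) - x y = sum_j phi_j(x) phi_j(y) / lam_j] (the Green function of [-d^2/dx^2]),
   which reduces to the classical sum [sum_j cos(j t) / j^2 = PI^2/6 - PI t/2 + t^2/4] on
   [[0, 2 PI]], proved with Dirichlet's kernel. *)

(* [fsum f n = f 0 + ... + f (n-1)]; unlike [sum_f_R0] it has an empty case. *)
Fixpoint fsum (f : nat -> R) (n : nat) : R :=
  match n with O => 0 | S k => fsum f k + f k end.

Lemma fsum_S f n : fsum f (S n) = fsum f n + f n.
Proof. reflexivity. Qed.

Lemma fsum_ext f g n : (forall i, (i < n)%nat -> f i = g i) -> fsum f n = fsum g n.
Proof.
  induction n as [|n IH]; simpl; intros H; auto.
  rewrite IH by (intros; apply H; lia). rewrite H by lia. reflexivity.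
Qed.

Lemma fsum_zero f n : (forall i, (i < n)%nat -> f i = 0) -> fsum f n = 0.
Proof. intros H. rewrite (fsum_ext f (fun _ => 0)) by auto. clear H. induction n; simpl; lra. Qed.

Lemma fsum_plus f g n : fsum (fun i => f i + g i) n = fsum f n + fsum g n.
Proof. induction n as [|n IH]; simpl; [lra|]. rewrite IH; lra. Qed.

Lemma fsum_minus f g n : fsum (fun i => f i - g i) n = fsum f n - fsum g n.
Proof. induction n as [|n IH]; simpl; [lra|]. rewrite IH; lra. Qed.

Lemma fsum_scal_l c f n : fsum (fun i => c * f i) n = c * fsum f n.
Proof. induction n as [|n IH]; simpl; [lra|]. rewrite IH; lra. Qed.

Lemma fsum_scal_r f c n : fsum (fun i => f i * c) n = fsum f n * c.
Proof. rewrite Rmult_comm, <- fsum_scal_l. apply fsum_ext; intros; ring. Qed.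

Lemma fsum_div f c n : fsum (fun i => f i / c) n = fsum f n / c.
Proof. apply fsum_scal_r. Qed.

Lemma fsum_shift f n : fsum f (S n) = f O + fsum (fun i => f (S i)) n.
Proof. induction n as [|n IH]; simpl in *; [lra|]. rewrite IH; lra. Qed.

Lemma sum_n_fsum (a : nat -> R) N : sum_n a N = fsum a (S N).
Proof.
  induction N as [|N IH]; [rewrite sum_O; simpl; ring|].
  rewrite sum_Sn, IH. reflexivity.
Qed.

Lemma cont_plus (f g : R -> R) x :
  continuous f x -> continuous g x -> continuous (fun x => f x + g x) x.
Proof. intros; apply (continuous_plus f g); auto. Qed.

Lemma cont_mult (f g : R -> R) x :
  continuous f x -> continuous g x -> continuous (fun x => f x * g x) x.
Proof. intros; apply (continuous_mult f g); auto. Qed.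

Lemma cont_const (c : R) x : continuous (fun _ : R => c) x.
Proof. apply continuous_const. Qed.

Lemma cont_scal c (f : R -> R) x : continuous f x -> continuous (fun x => c * f x) x.
Proof. intros; apply cont_mult; auto; apply cont_const. Qed.

Lemma cont_opp (f : R -> R) x : continuous f x -> continuous (fun x => - f x) x.
Proof.
  intros Hf. eapply continuous_ext; [|apply (cont_scal (-1) f x Hf)].
  intros; simpl; ring.
Qed.

Lemma cont_minus (f g : R -> R) x :
  continuous f x -> continuous g x -> continuous (fun x => f x - g x) x.
Proof. intros; apply cont_plus; auto; apply cont_opp; auto. Qed.

Lemma cont_fsum (f : nat -> R -> R) n x : (forall i, (i < n)%nat -> continuous (f i) x) ->
  continuous (fun x => fsum (fun i => f i x) n) x.
Proof.
  induction n as [|n IH]; simpl; intros H; [apply cont_const|].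
  apply cont_plus; [apply IH; intros|]; apply H; lia.
Qed.

Lemma is_derive_continuous (f : R -> R) (x l : R) : is_derive f x l -> continuous f x.
Proof.
  intros H. apply (ex_derive_continuous (K:=R_AbsRing) (V:=R_NormedModule)). exists l; auto.
Qed.

Lemma is_derive_plus' f g x a b c : is_derive f x a -> is_derive g x b -> c = a + b ->
  is_derive (fun t => f t + g t) x c.
Proof. intros Hf Hg ->. apply (is_derive_plus f g x a b Hf Hg). Qed.

Lemma is_derive_minus' f g x a b c : is_derive f x a -> is_derive g x b -> c = a - b ->
  is_derive (fun t => f t - g t) x c.
Proof. intros Hf Hg ->. apply (is_derive_minus f g x a b Hf Hg). Qed.

Lemma is_derive_mult' (f g : R -> R) x a b c :
  is_derive f x a -> is_derive g x b -> c = a * g x + f x * b ->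
  is_derive (fun t => f t * g t) x c.
Proof. intros Hf Hg ->. apply (is_derive_mult f g x a b Hf Hg). intros; apply Rmult_comm. Qed.

Lemma is_derive_scal' (f : R -> R) x k a c :
  is_derive f x a -> c = k * a -> is_derive (fun t => k * f t) x c.
Proof. intros H ->. apply (is_derive_scal f x k a H). Qed.

Lemma is_derive_fsum (f df : nat -> R -> R) n x :
  (forall i, (i < n)%nat -> is_derive (f i) x (df i x)) ->
  is_derive (fun x => fsum (fun i => f i x) n) x (fsum (fun i => df i x) n).
Proof.
  induction n as [|n IH]; simpl; intros H.
  - apply (is_derive_const (K:=R_AbsRing) (V:=R_NormedModule)).
  - apply is_derive_plus' with (a := fsum (fun i => df i x) n) (b := df n x);
      [apply IH; intros; apply H; lia | apply H; lia | reflexivity].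
Qed.

Lemma Derive_zero (f : R -> R) x : (forall t, f t = 0) -> Derive f x = 0.
Proof. intros H. rewrite (Derive_ext f (fun _ => 0)) by auto. apply Derive_const. Qed.

Lemma MVT_abs_le f df x y C :
  (forall s, Rmin x y <= s <= Rmax x y -> is_derive f s (df s)) ->
  (forall s, Rmin x y <= s <= Rmax x y -> Rabs (df s) <= C) ->
  Rabs (f y - f x) <= C * Rabs (y - x).
Proof.
  intros Hd Hb. destruct (MVT_gen f x y df) as [c [Hc ->]].
  - intros; apply Hd; lra.
  - intros s Hs. apply continuity_pt_filterlim. eapply is_derive_continuous. apply Hd; lra.
  - rewrite Rabs_mult. apply Rmult_le_compat_r; [apply Rabs_pos | auto].
Qed.

Fixpoint Ck (n : nat) (f : R -> R) : Prop :=
  match n with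
  | O => forall x, continuous f x
  | S k => (forall x, ex_derive f x) /\ Ck k (Derive f)
  end.

Definition Smooth f := forall n, Ck n f.

Lemma Ck_ext n : forall f g, (forall x, f x = g x) -> Ck n f -> Ck n g.
Proof.
  induction n as [|n IH]; simpl; intros f g H Hf.
  - intros x. eapply continuous_ext; [apply H | apply Hf].
  - destruct Hf as [H1 H2]. split.
    + intros x. eapply ex_derive_ext; [apply H | apply H1].
    + eapply IH; [|apply H2]. intros x. apply Derive_ext. auto.
Qed.

Lemma Ck_weaken n : forall f, Ck (S n) f -> Ck n f.
Proof.
  induction n as [|n IH]; simpl; intros f [H1 H2].
  - intros x. apply (ex_derive_continuous (K:=R_AbsRing) (V:=R_NormedModule)), H1.
  - split; auto.
Qed.

Lemma Ck_plus n : forall f g, Ck n f -> Ck n g -> Ck n (fun x => f x + g x).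
Proof.
  induction n as [|n IH]; simpl; intros f g Hf Hg.
  - intros x. apply cont_plus; auto.
  - destruct Hf as [F1 F2], Hg as [G1 G2]. split.
    + intros x. apply (ex_derive_plus f g); auto.
    + eapply Ck_ext; [|apply (IH _ _ F2 G2)]. intros x. simpl. rewrite Derive_plus; auto.
Qed.

Lemma Ck_mult n : forall f g, Ck n f -> Ck n g -> Ck n (fun x => f x * g x).
Proof.
  induction n as [|n IH]; simpl; intros f g Hf Hg.
  - intros x. apply cont_mult; auto.
  - pose proof (Ck_weaken n f Hf) as Wf. pose proof (Ck_weaken n g Hg) as Wg.
    destruct Hf as [F1 F2], Hg as [G1 G2]. split.
    + intros x. apply ex_derive_mult; auto.
    + eapply Ck_ext; [|apply Ck_plus; [apply (IH _ _ F2 Wg) | apply (IH _ _ Wf G2)]].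
      intros x. simpl. rewrite Derive_mult; auto.
Qed.

Lemma Smooth_plus f g : Smooth f -> Smooth g -> Smooth (fun x => f x + g x).
Proof. intros Hf Hg n. apply Ck_plus; auto. Qed.

Lemma Smooth_mult f g : Smooth f -> Smooth g -> Smooth (fun x => f x * g x).
Proof. intros Hf Hg n. apply Ck_mult; auto. Qed.

Lemma Smooth_ext f g : (forall x, f x = g x) -> Smooth f -> Smooth g.
Proof. intros H Hf n. eapply Ck_ext; eauto. Qed.

Lemma Smooth_Derive f : Smooth f -> Smooth (Derive f).
Proof. intros Hf n. apply (Hf (S n)). Qed.

Lemma Smooth_is_derive f : Smooth f -> forall x, is_derive f x (Derive f x).
Proof. intros Hf x. apply Derive_correct, (Hf 1%nat). Qed.

Lemma Smooth_cont f : Smooth f -> forall x, continuous f x.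
Proof. intros Hf. apply (Hf O). Qed.

Lemma Smooth_const c : Smooth (fun _ => c).
Proof.
  intros n. revert c. induction n as [|n IH]; simpl; intros c.
  - intros; apply cont_const.
  - split; [intros; apply ex_derive_const|].
    eapply Ck_ext; [|apply (IH 0)]. intros; simpl. rewrite Derive_const; auto.
Qed.

(* Derivatives of [a sin (c x + b)] stay in the family: [(a c) sin (c x + (b + PI/2))]. *)
Lemma Smooth_scaled_sin a c b : Smooth (fun x => a * sin (c * x + b)).
Proof.
  intros n. revert a b. induction n as [|n IH]; intros a b; simpl.
  - intros x. apply (continuous_comp (fun x => c * x + b) (fun y => a * sin y)).
    + eapply is_derive_continuous. auto_derive; auto.
    + eapply is_derive_continuous. auto_derive; auto.
  - split; [intros x; auto_derive; auto|].
    eapply Ck_ext; [|apply (IH (a * c) (b + PI/2))]. intros x. simpl.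
    symmetry. apply is_derive_unique. auto_derive; auto.
    replace (c * x + (b + PI/2)) with ((c*x+b) + PI/2) by ring.
    rewrite sin_plus, sin_PI2, cos_PI2. ring.
Qed.

(** * The series [sum_j cos (j t) / j^2] *)

Definition cos2_psum N t := fsum (fun j => cos (INR (S j) * t) / INR (S j) ^ 2) N.
Definition sin_psum N t := fsum (fun j => sin (INR (S j) * t) / INR (S j)) N.
Definition cos_psum N t := fsum (fun j => cos (INR (S j) * t)) N.

(* The sum of [cos (j t) / j^2] over [j >= 1], valid for [0 <= t <= 2 PI]. *)
Definition cos2_sum t := PI ^ 2 / 6 - PI * t / 2 + t ^ 2 / 4.

Definition cos2_err N t := cos2_psum N t - cos2_sum t.
Definition cos2_err' N t := - sin_psum N t + PI / 2 - t / 2.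

Definition harmonic_decay (u : nat -> R) :=
  exists C, forall N, Rabs (u N) <= C / (INR N + 1/2).

Lemma INR_S_pos j : 0 < INR (S j).
Proof. apply lt_0_INR; lia. Qed.

Lemma INR_half_pos N : 0 < INR N + 1/2.
Proof. pose proof (pos_INR N); lra. Qed.

Lemma sin_INR_PI j : sin (INR j * PI) = 0.
Proof. apply sin_eq_0_1. exists (Z.of_nat j). rewrite INR_IZR_INZ. auto. Qed.

Lemma is_derive_cos2_psum N t : is_derive (cos2_psum N) t (- sin_psum N t).
Proof.
  replace (- sin_psum N t) with (fsum (fun j => - sin (INR (S j) * t) / INR (S j)) N).
  - apply (is_derive_fsum (fun j t => cos (INR (S j) * t) / INR (S j) ^ 2)
                           (fun j t => - sin (INR (S j) * t) / INR (S j))).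
    intros j _. pose proof (INR_S_pos j). remember (INR (S j)) as n. auto_derive; auto. field. lra.
  - replace (- sin_psum N t) with (-1 * sin_psum N t) by ring.
    unfold sin_psum. rewrite <- fsum_scal_l. apply fsum_ext. intros. unfold Rdiv. ring.
Qed.

Lemma is_derive_sin_psum N t : is_derive (sin_psum N) t (cos_psum N t).
Proof.
  apply (is_derive_fsum (fun j t => sin (INR (S j) * t) / INR (S j))
                        (fun j t => cos (INR (S j) * t))).
  intros j _. pose proof (INR_S_pos j). remember (INR (S j)) as n. auto_derive; auto. field. lra.
Qed.

Lemma is_derive_cos2_err N t : is_derive (cos2_err N) t (cos2_err' N t).
Proof.
  apply is_derive_minus' with (a := - sin_psum N t) (b := - PI / 2 + t / 2).
  - apply is_derive_cos2_psum.
  - unfold cos2_sum. auto_derive; auto. field.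
  - unfold cos2_err'. field.
Qed.

Lemma is_derive_cos2_err' N t : is_derive (cos2_err' N) t (- cos_psum N t - 1/2).
Proof.
  unfold cos2_err'. apply is_derive_minus' with (a := - cos_psum N t) (b := 1/2).
  - apply is_derive_plus' with (a := - cos_psum N t) (b := 0).
    + apply (is_derive_opp (sin_psum N) t (cos_psum N t)), is_derive_sin_psum.
    + auto_derive; auto.
    + ring.
  - auto_derive; auto. field.
Qed.

Lemma dirichlet_kernel N t : 2 * sin (t/2) * (1/2 + cos_psum N t) = sin ((INR N + 1/2) * t).
Proof.
  induction N as [|N IH].
  - unfold cos_psum; cbn [fsum INR]. replace ((0 + 1/2) * t) with (t/2) by field. field.
  - unfold cos_psum in *. cbn [fsum].
    transitivity (2 * sin (t / 2) * (1 / 2 + fsum (fun j => cos (INR (S j) * t)) N)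
                  + 2 * sin (t/2) * cos (INR (S N) * t)); [ring|].
    rewrite IH, S_INR.
    replace ((INR N + 1/2) * t) with ((INR N + 1) * t - t/2) by field.
    replace ((INR N + 1 + 1/2) * t) with ((INR N + 1) * t + t/2) by field.
    rewrite sin_minus, sin_plus. ring.
Qed.

Lemma cos2_err'_PI N : cos2_err' N PI = 0.
Proof.
  unfold cos2_err', sin_psum. rewrite fsum_zero; [field|].
  intros. rewrite sin_INR_PI. field. pose proof (INR_S_pos i); lra.
Qed.

Lemma Rabs_scaled_inv_le x y M m : -1 <= x <= 1 -> 0 < m -> m <= y -> 0 < M ->
  Rabs (x * / (2 * y) / M) <= / (2*m) / M.
Proof.
  intros Hx Hm Hy HM.
  assert (0 < /M) by (apply Rinv_0_lt_compat; lra).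
  assert (0 < /(2*y)) by (apply Rinv_0_lt_compat; lra).
  assert (/(2*y) <= /(2*m)) by (apply Rinv_le_contravar; lra).
  unfold Rdiv. rewrite !Rabs_mult, (Rabs_right (/M)), (Rabs_right (/(2*y))) by lra.
  assert (Rabs x <= 1) by (apply Rabs_le; lra). pose proof (Rabs_pos x).
  apply Rmult_le_compat_r; [lra | nra].
Qed.

Lemma Rabs_scaled_inv_sq_le x y z M m :
  -1 <= x <= 1 -> -1 <= y <= 1 -> 0 < m -> m <= z -> 0 < M ->
  Rabs (- (x * (- y * / (4 * z ^ 2))) / M) <= / (4*m^2) / M.
Proof.
  intros Hx Hy Hm Hz HM.
  assert (0 < /M) by (apply Rinv_0_lt_compat; lra).
  assert (0 < /(4*z^2)) by (apply Rinv_0_lt_compat; nra).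
  assert (/(4*z^2) <= /(4*m^2)) by (apply Rinv_le_contravar; nra).
  unfold Rdiv. rewrite Rabs_mult, Rabs_Ropp, !Rabs_mult, Rabs_Ropp, (Rabs_right (/M)),
    (Rabs_right (/(4*z^2))) by lra.
  assert (Rabs x <= 1) by (apply Rabs_le; lra). pose proof (Rabs_pos x).
  assert (Rabs y <= 1) by (apply Rabs_le; lra). pose proof (Rabs_pos y).
  apply Rmult_le_compat_r; [lra|].
  assert (Rabs y * / (4 * z^2) <= / (4*m^2)) by nra. nra.
Qed.

(* By [dirichlet_kernel], the derivative of [cos2_err' N] is [- sin (M s) / (2 sin (s/2))]
   with [M = N + 1/2]; up to an error of order [1/M], this is the derivative of
   [cos (M s) / (2 M sin (s/2))]. *)
Lemma is_derive_cos2_err'_corrected N s : let M := INR N + 1/2 in 0 < sin (s/2) ->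
  is_derive (fun s => cos2_err' N s - cos (M*s) * / (2 * sin (s/2)) / M) s
    (- (cos (M*s) * (- cos (s/2) * / (4 * sin (s/2) ^ 2))) / M).
Proof.
  intros M Hs. assert (HM : 0 < M) by apply INR_half_pos.
  apply is_derive_minus' with (a := - cos_psum N s - 1/2)
     (b := - sin (M*s) * / (2 * sin (s/2))
           + cos (M*s) * (- cos (s/2) * / (4 * sin (s/2) ^ 2)) / M).
  - apply is_derive_cos2_err'.
  - auto_derive; [lra|]. change (s * / 2) with (s / 2). field. lra.
  - pose proof (dirichlet_kernel N s) as Hd. fold M in Hd.
    replace (- cos_psum N s - 1/2) with (- sin (M*s) * / (2 * sin (s/2)))
      by (rewrite <- Hd; field; lra).
    field. lra.
Qed.

Lemma cos2_err'_decay a b : 0 < a <= PI -> PI <= b < 2 * PI ->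
  exists K, forall N s, a <= s <= b -> Rabs (cos2_err' N s) <= K / (INR N + 1/2).
Proof.
  intros Ha Hb. pose proof PI_RGT_0 as HPI.
  destruct (continuity_ab_min (fun s => sin (s/2)) a b) as [mx [Hmin Hmx]]; [lra|..].
  { intros c _. apply continuity_pt_filterlim.
    apply (is_derive_continuous (fun s => sin (s/2)) c (cos (c/2) / 2)).
    auto_derive; auto. unfold Rdiv. ring. }
  set (m := sin (mx/2)).
  assert (Hm : 0 < m) by (apply sin_gt_0; lra).
  assert (Hs : forall s, a <= s <= b -> m <= sin (s/2)) by (intros; apply Hmin; auto).
  set (U0 := / (2*m)). set (U1 := / (4 * m^2)).
  assert (HU1 : 0 < U1) by (unfold U1; apply Rinv_0_lt_compat; nra).
  exists (2*U0 + 2*PI*U1). intros N s Hs'. set (M := INR N + 1/2).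
  assert (HM : 0 < M) by apply INR_half_pos.
  assert (Hg : forall s, a <= s <= b -> Rabs (cos (M*s) * / (2 * sin (s/2)) / M) <= U0 / M).
  { intros r Hr. pose proof (Hs r Hr). apply Rabs_scaled_inv_le; auto; apply COS_bound. }
  set (H := fun s => cos2_err' N s - cos (M*s) * / (2 * sin (s/2)) / M).
  set (dH := fun s => - (cos (M*s) * (- cos (s/2) * / (4 * sin (s/2) ^ 2))) / M).
  assert (HdH : forall s, a <= s <= b -> is_derive H s (dH s))
    by (intros r Hr; apply is_derive_cos2_err'_corrected; pose proof (Hs r Hr); lra).
  assert (HHs : Rabs (H s - H PI) <= U1 / M * Rabs (s - PI)).
  { apply MVT_abs_le with (df := dH); intros r Hr;
      (assert (a <= r <= b) by (unfold Rmin, Rmax in Hr; destruct Rle_dec; lra)).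
    - apply HdH; auto.
    - pose proof (Hs r ltac:(auto)). unfold dH. apply Rabs_scaled_inv_sq_le; auto; apply COS_bound. }
  assert (HHPI : Rabs (H PI) <= U0 / M).
  { unfold H. rewrite cos2_err'_PI, Rminus_0_l, Rabs_Ropp. apply Hg; lra. }
  assert (Hsp : Rabs (s - PI) <= 2*PI) by (apply Rabs_le; lra).
  assert (Hgs := Hg s Hs').
  replace (cos2_err' N s) with ((H s - H PI) + H PI + cos (M*s) * / (2 * sin (s/2)) / M)
    by (unfold H; ring).
  assert (U1 / M * Rabs (s - PI) <= U1 / M * (2*PI)).
  { apply Rmult_le_compat_l; auto. left. unfold Rdiv; apply Rmult_lt_0_compat; auto.
    apply Rinv_0_lt_compat; lra. }
  eapply Rle_trans; [apply Rabs_triang|]. eapply Rle_trans; [apply Rplus_le_compat_r, Rabs_triang|].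
  unfold Rdiv in *. nra.
Qed.

Lemma cos2_err_diff_decay t : 0 < t < 2 * PI ->
  harmonic_decay (fun N => cos2_err N t - cos2_err N PI).
Proof.
  intros Ht. pose proof PI_RGT_0.
  destruct (cos2_err'_decay (Rmin t PI) (Rmax t PI)) as [K HK];
    [unfold Rmin; destruct Rle_dec; lra | unfold Rmax; destruct Rle_dec; lra |].
  exists (2*PI*K). intros N. pose proof (INR_half_pos N).
  eapply Rle_trans.
  - apply MVT_abs_le with (df := cos2_err' N) (C := K / (INR N + 1/2)).
    + intros; apply is_derive_cos2_err.
    + intros r Hr. apply HK. unfold Rmin, Rmax in *; repeat destruct Rle_dec; lra.
  - assert (Rabs (t - PI) <= 2*PI) by (apply Rabs_le; lra).
    assert (0 <= K / (INR N + 1/2)).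
    { eapply Rle_trans; [apply Rabs_pos | apply (HK N PI)].
      unfold Rmin, Rmax; destruct Rle_dec; lra. }
    unfold Rdiv in *. nra.
Qed.

(* Even and odd indices separate: [cos (j (t + PI)) = (-1)^j cos (j t)]. *)
Lemma cos2_psum_double N t : cos2_psum (2*N) t + cos2_psum (2*N) (t + PI) = cos2_psum N (2*t) / 2.
Proof.
  induction N as [|N IH]; [unfold cos2_psum; simpl; field|].
  replace (2 * S N)%nat with (S (S (2*N))) by lia. unfold cos2_psum in *. cbn [fsum].
  replace (INR (S (S (2*N)))) with (2*INR N + 2) by (rewrite !S_INR, mult_INR; simpl; ring).
  replace (INR (S (2*N))) with (2*INR N + 1) by (rewrite !S_INR, mult_INR; simpl; ring).
  replace (INR (S N)) with (INR N + 1) by (rewrite S_INR; ring).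
  replace ((2 * INR N + 1) * (t + PI)) with (((2*INR N + 1) * t + 2 * INR N * PI) + PI) by ring.
  rewrite neg_cos, cos_period.
  replace ((2 * INR N + 2) * (t + PI)) with ((2*INR N + 2) * t + 2 * INR (S N) * PI)
    by (rewrite S_INR; ring).
  rewrite cos_period.
  replace ((INR N + 1) * (2*t)) with ((2*INR N + 2) * t) by ring.
  assert (0 < 2 * INR N + 1) by (pose proof (pos_INR N); lra).
  rewrite Rdiv_plus_distr, <- IH.
  match goal with |- ?A + ?B + ?C + (?E + ?F + ?G) = _ =>
    replace (A + B + C + (E + F + G)) with ((A + E) + B + C + F + G) by ring end.
  field. lra.
Qed.

Lemma cos2_err_double N t : cos2_err (2*N) t + cos2_err (2*N) (t + PI) = cos2_err N (2*t) / 2.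
Proof.
  unfold cos2_err.
  transitivity ((cos2_psum (2 * N) t + cos2_psum (2 * N) (t + PI))
                - (cos2_sum t + cos2_sum (t + PI))); [ring|].
  rewrite cos2_psum_double. unfold cos2_sum. field.
Qed.

Definition inv_sq_psum N := fsum (fun j => / INR (S j) ^ 2) N.

Lemma inv_sq_psum_tail N k :
  inv_sq_psum (N + k) - inv_sq_psum N <= 2 / (INR N + 1) - 2 / (INR (N + k) + 1).
Proof.
  induction k as [|k IH]; [rewrite Nat.add_0_r; lra|].
  replace (N + S k)%nat with (S (N + k)) by lia. unfold inv_sq_psum in *. cbn [fsum].
  enough (/ INR (S (N + k)) ^ 2 <= 2 / (INR (N + k) + 1) - 2 / (INR (S (N + k)) + 1)) by lra.
  rewrite S_INR. set (x := INR (N+k)).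
  assert (0 <= x) by apply pos_INR.
  replace (2 / (x + 1) - 2 / (x + 1 + 1)) with (2 / ((x+1)*(x+2))) by (field; split; lra).
  replace (/ (x+1)^2) with (1 / ((x+1)*(x+1))) by (field; lra).
  assert (2 / ((x+1)*(x+2)) - 1 / ((x+1)*(x+1)) = x * / ((x+1)*(x+1)*(x+2)))
    by (field; split; lra).
  assert (0 <= x * / ((x+1)*(x+1)*(x+2)))
    by (apply Rmult_le_pos; [lra | left; apply Rinv_0_lt_compat; nra]).
  lra.
Qed.

Lemma cos2_psum_cauchy N k t :
  Rabs (cos2_psum (N + k) t - cos2_psum N t) <= inv_sq_psum (N + k) - inv_sq_psum N.
Proof.
  induction k as [|k IH].
  - rewrite Nat.add_0_r, Rminus_diag, Rabs_R0. lra.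
  - replace (N + S k)%nat with (S (N + k)) by lia. unfold cos2_psum, inv_sq_psum in *.
    cbn [fsum]. set (n := INR (S (N + k))).
    match goal with |- Rabs (?A + ?b - ?B) <= _ =>
      replace (A + b - B) with ((A - B) + b) by ring end.
    eapply Rle_trans; [apply Rabs_triang|].
    enough (Rabs (cos (n * t) / n ^ 2) <= / n ^ 2) by lra.
    assert (0 < n) by apply INR_S_pos.
    assert (0 < / n ^ 2) by (apply Rinv_0_lt_compat; nra).
    unfold Rdiv. rewrite Rabs_mult, (Rabs_right (/ _)) by lra.
    pose proof (COS_bound (n * t)).
    assert (Rabs (cos (n * t)) <= 1) by (apply Rabs_le; lra). nra.
Qed.

Lemma cos2_err_cauchy N M t : (N <= M)%nat -> Rabs (cos2_err M t - cos2_err N t) <= 2 / (INR N + 1).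
Proof.
  intros H. destruct (Nat.le_exists_sub N M H) as [k [-> _]].
  rewrite Nat.add_comm. unfold cos2_err.
  replace (cos2_psum (N + k) t - cos2_sum t - (cos2_psum N t - cos2_sum t))
    with (cos2_psum (N + k) t - cos2_psum N t) by ring.
  eapply Rle_trans; [apply cos2_psum_cauchy|]. pose proof (inv_sq_psum_tail N k).
  assert (0 <= 2 / (INR (N + k) + 1)).
  { pose proof (pos_INR (N+k)). unfold Rdiv. apply Rmult_le_pos; [lra|].
    left; apply Rinv_0_lt_compat; lra. }
  lra.
Qed.

Lemma div_le_contravar c a b : 0 <= c -> 0 < a <= b -> c / b <= c / a.
Proof. intros Hc Hab. unfold Rdiv. apply Rmult_le_compat_l; auto. apply Rinv_le_contravar; lra. Qed.

Lemma harmonic_decay_const_nonneg (C : R) (u : nat -> R) :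
  (forall N, Rabs (u N) <= C / (INR N + 1/2)) -> 0 <= C.
Proof.
  intros H. specialize (H O). simpl in H. pose proof (Rabs_pos (u O)).
  replace C with ((C / (0 + 1/2)) * (1/2)) by field. nra.
Qed.

Lemma harmonic_decay_plus u v :
  harmonic_decay u -> harmonic_decay v -> harmonic_decay (fun N => u N + v N).
Proof.
  intros [C1 H1] [C2 H2]. exists (C1 + C2). intros N. pose proof (INR_half_pos N).
  eapply Rle_trans; [apply Rabs_triang|].
  specialize (H1 N). specialize (H2 N). unfold Rdiv in *. lra.
Qed.

Lemma harmonic_decay_double_index u :
  harmonic_decay u -> exists C, 0 <= C /\ forall N, Rabs (u (2 * N)%nat) <= C / (INR N + 1/2).
Proof.
  intros [C H]. pose proof (harmonic_decay_const_nonneg C u H). exists C. split; auto.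
  intros N. eapply Rle_trans; [apply H|]. apply div_le_contravar; auto.
  rewrite mult_INR. simpl. pose proof (pos_INR N); lra.
Qed.

(* [x := cos2_err N PI] satisfies [x/2 = u + v] with [u], [v] close to [cos2_err (2N) PI],
   itself close to [x]; hence [3 x / 2] is small. *)
Lemma cos2_err_PI_decay : harmonic_decay (fun N => cos2_err N PI).
Proof.
  pose proof PI_RGT_0.
  destruct (harmonic_decay_double_index _ (cos2_err_diff_decay (PI/2) ltac:(lra)))
    as [C1 [HC1 H1]].
  destruct (harmonic_decay_double_index _ (cos2_err_diff_decay (3*PI/2) ltac:(lra)))
    as [C2 [HC2 H2]].
  exists (C1 + C2 + 4). intros N.
  pose proof (cos2_err_double N (PI/2)) as Hd.
  replace (PI/2 + PI) with (3*PI/2) in Hd by field. replace (2 * (PI/2)) with PI in Hd by field.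
  specialize (H1 N). specialize (H2 N).
  assert (Hc := cos2_err_cauchy N (2*N) PI ltac:(lia)).
  pose proof (INR_half_pos N).
  assert (2 / (INR N + 1) <= 2 / (INR N + 1/2)) by (apply div_le_contravar; lra).
  replace ((C1 + C2 + 4) / (INR N + 1/2))
    with (C1 / (INR N + 1/2) + C2 / (INR N + 1/2) + 2 * (2 / (INR N + 1/2))) by (field; lra).
  apply Rabs_le_between in H1. apply Rabs_le_between in H2. apply Rabs_le_between in Hc.
  apply Rabs_le. lra.
Qed.

Lemma cos2_err_0_decay : harmonic_decay (fun N => cos2_err N 0).
Proof.
  destruct (harmonic_decay_double_index _ cos2_err_PI_decay) as [Cp [HCp Hp]].
  exists (4 + 2 * Cp). intros N.
  pose proof (cos2_err_double N 0) as Hd.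
  replace (0 + PI) with PI in Hd by ring. replace (2*0) with 0 in Hd by ring.
  assert (Hc := cos2_err_cauchy N (2*N) 0 ltac:(lia)).
  specialize (Hp N). pose proof (INR_half_pos N).
  assert (2 / (INR N + 1) <= 2 / (INR N + 1/2)) by (apply div_le_contravar; lra).
  replace ((4 + 2*Cp) / (INR N + 1/2))
    with (2 * (2 / (INR N + 1/2)) + 2 * (Cp / (INR N + 1/2))) by (field; lra).
  apply Rabs_le_between in Hp. apply Rabs_le_between in Hc.
  apply Rabs_le. lra.
Qed.

Lemma cos2_err_decay t : 0 <= t <= 2 * PI -> harmonic_decay (fun N => cos2_err N t).
Proof.
  intros Ht. pose proof PI_RGT_0.
  destruct (Req_dec t 0) as [->|Ht0]; [apply cos2_err_0_decay|].
  destruct (Req_dec t (2*PI)) as [->|Ht2].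
  - destruct cos2_err_0_decay as [C HC]. exists C. intros N.
    replace (cos2_err N (2*PI)) with (cos2_err N 0); [apply HC|].
    unfold cos2_err, cos2_psum, cos2_sum. f_equal; [|field].
    apply fsum_ext. intros i _. f_equal.
    replace (INR (S i) * (2*PI)) with (0 + 2 * INR (S i) * PI) by ring.
    rewrite cos_period. f_equal. ring.
  - destruct (harmonic_decay_plus _ _ (cos2_err_diff_decay t ltac:(lra)) cos2_err_PI_decay)
      as [C HC].
    exists C. intros N.
    replace (cos2_err N t) with (cos2_err N t - cos2_err N PI + cos2_err N PI) by ring.
    apply HC.
Qed.

Lemma Rabs_le_of_decay_cauchy (u : nat -> R) b N : harmonic_decay u ->
  (forall M, (N <= M)%nat -> Rabs (u M - u N) <= b) -> Rabs (u N) <= b.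
Proof.
  intros [C HC] Hb.
  assert (HC0 : 0 <= C) by (eapply harmonic_decay_const_nonneg; apply HC).
  destruct (Rle_lt_dec (Rabs (u N)) b) as [|Hlt]; auto. exfalso.
  set (d := Rabs (u N) - b). assert (Hd : 0 < d) by (unfold d; lra).
  destruct (INR_unbounded (C / d)) as [M0 HM0].
  set (M := Nat.max N M0).
  assert (INR M0 <= INR M) by (apply le_INR; lia).
  pose proof (Hb M ltac:(lia)) as Hc. specialize (HC M).
  assert (HMd : C / (INR M + 1/2) < d).
  { pose proof (INR_half_pos M). apply Rlt_div_l; [lra|].
    apply Rlt_div_l in HM0; nra. }
  pose proof (Rabs_triang_inv (u N) (u M)).
  rewrite Rabs_minus_sym in Hc. unfold d in *. lra.
Qed.

Lemma cos2_err_uniform t N : 0 <= t <= 2 * PI -> Rabs (cos2_err N t) <= 2 / (INR N + 1).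
Proof.
  intros Ht. apply (Rabs_le_of_decay_cauchy (fun N => cos2_err N t));
    [apply cos2_err_decay; auto|].
  intros M HM. apply cos2_err_cauchy; auto.
Qed.

(** * Parseval's identity for the Dirichlet sine basis *)

Lemma RInt_plus' (f g : R -> R) a b : ex_RInt f a b -> ex_RInt g a b ->
  RInt (fun x => f x + g x) a b = RInt f a b + RInt g a b :> R.
Proof. intros; apply (RInt_plus f g); auto. Qed.

Lemma RInt_minus' (f g : R -> R) a b : ex_RInt f a b -> ex_RInt g a b ->
  RInt (fun x => f x - g x) a b = RInt f a b - RInt g a b :> R.
Proof. intros; apply (RInt_minus f g); auto. Qed.

Lemma RInt_scal' (f : R -> R) c a b : ex_RInt f a b -> RInt (fun x => c * f x) a b = c * RInt f a b :> R.
Proof. intros; apply (RInt_scal f); auto. Qed.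

Lemma RInt_ext' (f g : R -> R) a b :
  (forall x, Rmin a b < x < Rmax a b -> f x = g x) -> RInt f a b = RInt g a b.
Proof. apply RInt_ext. Qed.

Lemma RInt_Chasles' (f : R -> R) a b c : ex_RInt f a b -> ex_RInt f b c ->
  RInt f a b + RInt f b c = RInt f a c :> R.
Proof. intros; apply (RInt_Chasles f); auto. Qed.

Lemma ex_RInt_01 (f : R -> R) : (forall x, 0 <= x <= 1 -> continuous f x) -> ex_RInt f 0 1.
Proof.
  intros H. apply (ex_RInt_continuous f). rewrite Rmin_left, Rmax_right by lra. auto.
Qed.

Lemma RInt_FTC (F f : R -> R) a b : a <= b ->
  (forall x, a <= x <= b -> is_derive F x (f x)) -> (forall x, a <= x <= b -> continuous f x) ->
  RInt f a b = F b - F a :> R.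
Proof.
  intros Hab Hd Hc. apply is_RInt_unique, (is_RInt_derive F f a b);
    intros x Hx; rewrite Rmin_left, Rmax_right in Hx by lra; auto.
Qed.

Lemma RInt_fsum (f : nat -> R -> R) n a b : (forall i, (i < n)%nat -> ex_RInt (f i) a b) ->
  RInt (fun x => fsum (fun i => f i x) n) a b = fsum (fun i => RInt (f i) a b) n :> R.
Proof.
  induction n as [|n IH]; simpl; intros H.
  - rewrite RInt_const. simpl. unfold scal; simpl. unfold mult; simpl. ring.
  - assert (Hs : ex_RInt (fun x => fsum (fun i => f i x) n) a b).
    { clear IH. induction n as [|n IH]; simpl; [apply ex_RInt_const|].
      apply (ex_RInt_plus (fun x => fsum (fun i => f i x) n) (f n));
        [apply IH; intros|]; apply H; lia. }
    rewrite RInt_plus', IH; auto; intros; apply H; lia.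
Qed.

Lemma continuous_bounded_01 (f : R -> R) : (forall x, continuous f x) ->
  exists B, 0 <= B /\ forall x, 0 <= x <= 1 -> Rabs (f x) <= B.
Proof.
  intros Hf. destruct (continuity_ab_maj (fun x => Rabs (f x)) 0 1) as [M [HM _]]; [lra| |].
  - intros c _. apply continuity_pt_filterlim, continuous_Rabs_comp, Hf.
  - exists (Rabs (f M)). split; [apply Rabs_pos | auto].
Qed.

Lemma ip_opp (u v : R -> R) : (forall x, continuous u x) -> (forall x, continuous v x) ->
  ip (fun x => - u x) v = - ip u v.
Proof.
  intros Hu Hv. unfold ip. rewrite (RInt_ext' _ (fun x => (-1) * (u x * v x))) by (intros; ring).
  rewrite RInt_scal'; [ring|]. apply ex_RInt_01. intros; apply cont_mult; auto.
Qed.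

Lemma ip_ibp (u u' v v' : R -> R) :
  (forall x, is_derive u x (u' x)) -> (forall x, is_derive v x (v' x)) ->
  (forall x, continuous u' x) -> (forall x, continuous v' x) ->
  u 0 * v 0 = 0 -> u 1 * v 1 = 0 -> ip u' v = - ip u v'.
Proof.
  intros Du Dv Cu' Cv' Z0 Z1.
  assert (Cu : forall x, continuous u x) by (intros; eapply is_derive_continuous; apply Du).
  assert (Cv : forall x, continuous v x) by (intros; eapply is_derive_continuous; apply Dv).
  assert (Hprod : RInt (fun x => u' x * v x + u x * v' x) 0 1 = 0).
  { rewrite (RInt_FTC (fun x => u x * v x)); [lra | lra | |].
    - intros; apply is_derive_mult' with (a := u' x) (b := v' x); auto.
    - intros; apply cont_plus; apply cont_mult; auto. }
  rewrite RInt_plus' in Hprod by (apply ex_RInt_01; intros; apply cont_mult; auto).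
  unfold ip. lra.
Qed.

Lemma phi_smooth j : Smooth (phi j).
Proof.
  eapply Smooth_ext; [|apply (Smooth_scaled_sin (sqrt 2) (INR j * PI) 0)].
  intros. unfold phi. rewrite Rplus_0_r. reflexivity.
Qed.

Lemma phi_cont j x : continuous (phi j) x.
Proof. apply Smooth_cont, phi_smooth. Qed.

Lemma phi_0 j : phi j 0 = 0.
Proof. unfold phi. rewrite Rmult_0_r, sin_0. ring. Qed.

Lemma phi_1 j : phi j 1 = 0.
Proof. unfold phi. rewrite Rmult_1_r, sin_INR_PI. ring. Qed.

Definition dphi j x := sqrt 2 * (INR j * PI) * cos (INR j * PI * x).

Lemma is_derive_phi j x : is_derive (phi j) x (dphi j x).
Proof. unfold phi, dphi. auto_derive; auto. ring. Qed.

Lemma is_derive_dphi j x : is_derive (dphi j) x (- lam j * phi j x).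
Proof. unfold phi, dphi, lam. auto_derive; auto. ring. Qed.

Lemma dphi_cont j x : continuous (dphi j) x.
Proof. eapply is_derive_continuous, is_derive_dphi. Qed.

Lemma lam_pos j : 0 < lam (S j).
Proof.
  unfold lam. pose proof (INR_S_pos j). pose proof PI_RGT_0.
  apply pow_lt, Rmult_lt_0_compat; lra.
Qed.

Section SecondDerivative.

Variables g g1 g2 : R -> R.
Hypothesis g_g1 : forall x, is_derive g x (g1 x).
Hypothesis g1_g2 : forall x, is_derive g1 x (g2 x).
Hypothesis g2_cont : forall x, continuous g2 x.
Hypothesis g_0 : g 0 = 0.
Hypothesis g_1 : g 1 = 0.

Lemma ip_phi_lam j : ip g (phi j) * lam j = ip (fun x => - g2 x) (phi j).
Proof.
  assert (Cg : forall x, continuous g x) by (intros; eapply is_derive_continuous; apply g_g1).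
  assert (Cg1 : forall x, continuous g1 x) by (intros; eapply is_derive_continuous; apply g1_g2).
  rewrite ip_opp by (auto using phi_cont).
  rewrite (ip_ibp g1 g2 (phi j) (dphi j)); auto using is_derive_phi, dphi_cont;
    try (rewrite ?phi_0, ?phi_1; ring).
  rewrite (ip_ibp g g1 (dphi j) (fun x => - lam j * phi j x)); auto using is_derive_dphi;
    try (rewrite ?g_0, ?g_1; ring); [| intros; apply cont_scal, phi_cont].
  unfold ip.
  rewrite (RInt_ext' (fun x => g x * (- lam j * phi j x)) (fun x => (- lam j) * (g x * phi j x)))
    by (intros; ring).
  rewrite RInt_scal'; [ring|]. apply ex_RInt_01. intros; apply cont_mult; auto using phi_cont.
Qed.

End SecondDerivative.

(* Green's function of [- d^2/dx^2] on [0,1] with Dirichlet conditions. *)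
Definition green x y := Rmin x y - x * y.

Definition green_psum N x y := fsum (fun j => phi (S j) x * phi (S j) y / lam (S j)) N.

Lemma green_psum_cos2 N x y :
  green_psum N x y = (cos2_psum N (PI * Rabs (x - y)) - cos2_psum N (PI * (x + y))) / PI ^ 2.
Proof.
  unfold green_psum, cos2_psum. rewrite <- fsum_minus, <- fsum_div.
  apply fsum_ext. intros j _. unfold phi, lam. pose proof (INR_S_pos j). pose proof PI_RGT_0.
  set (n := INR (S j)) in *.
  replace (cos (n * (PI * Rabs (x - y)))) with (cos (n * PI * x - n * PI * y)).
  - replace (n * (PI * (x + y))) with (n * PI * x + n * PI * y) by ring.
    rewrite cos_minus, cos_plus.
    replace (sqrt 2 * sin (n * PI * x) * (sqrt 2 * sin (n * PI * y)))
      with ((sqrt 2 * sqrt 2) * sin (n * PI * x) * sin (n * PI * y)) by ring.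
    rewrite sqrt_sqrt by lra. field. split; lra.
  - unfold Rabs. destruct Rcase_abs; [rewrite <- cos_neg|]; f_equal; ring.
Qed.

Lemma green_cos2_sum x y : green x y = (cos2_sum (PI * Rabs (x - y)) - cos2_sum (PI * (x + y))) / PI^2.
Proof.
  pose proof PI_RGT_0. unfold green, cos2_sum, Rmin, Rabs.
  destruct Rle_dec; destruct Rcase_abs; try lra; try (field; lra);
    (assert (x = y) by lra; subst; field; lra).
Qed.

Lemma green_psum_approx N x y : 0 <= x <= 1 -> 0 <= y <= 1 ->
  Rabs (green_psum N x y - green x y) <= 4 / (PI^2 * (INR N + 1)).
Proof.
  intros Hx Hy. pose proof PI_RGT_0. pose proof (pos_INR N).
  rewrite green_psum_cos2, green_cos2_sum.
  replace ((cos2_psum N (PI * Rabs (x - y)) - cos2_psum N (PI * (x + y))) / PI ^ 2 -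
    (cos2_sum (PI * Rabs (x - y)) - cos2_sum (PI * (x + y))) / PI ^ 2)
    with ((cos2_err N (PI * Rabs (x - y)) - cos2_err N (PI * (x + y))) * / PI^2)
    by (unfold cos2_err; field; lra).
  rewrite Rabs_mult, (Rabs_right (/ PI^2)) by (left; apply Rinv_0_lt_compat; nra).
  assert (H1 : Rabs (cos2_err N (PI * Rabs (x - y))) <= 2 / (INR N + 1)).
  { apply cos2_err_uniform. pose proof (Rabs_pos (x - y)).
    assert (Rabs (x-y) <= 1) by (apply Rabs_le; lra). nra. }
  assert (H2 : Rabs (cos2_err N (PI * (x + y))) <= 2 / (INR N + 1))
    by (apply cos2_err_uniform; nra).
  set (e1 := cos2_err N (PI * Rabs (x - y))) in *. set (e2 := cos2_err N (PI * (x + y))) in *.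
  pose proof (Rabs_triang e1 (- e2)) as H3. rewrite Rabs_Ropp in H3.
  replace (4 / (PI^2 * (INR N + 1))) with ((2 / (INR N + 1) + 2 / (INR N + 1)) * / PI^2)
    by (field; split; lra).
  apply Rmult_le_compat_r; [left; apply Rinv_0_lt_compat; nra|].
  unfold Rminus. lra.
Qed.

Lemma green_cont x y : continuous (fun y => green x y) y.
Proof.
  eapply continuous_ext with (f := fun y => (x + y - Rabs (x - y)) / 2 - x * y).
  - intros t. unfold green, Rmin, Rabs. destruct Rle_dec, Rcase_abs; lra.
  - apply cont_minus; [|apply cont_scal, continuous_id].
    unfold Rdiv. apply cont_mult; [|apply cont_const].
    apply cont_minus; [apply cont_plus; [apply cont_const | apply continuous_id]|].
    apply continuous_Rabs_comp, cont_minus; [apply cont_const | apply continuous_id].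
Qed.

Lemma green_solves (g g1 g2 : R -> R) x :
  (forall x, is_derive g x (g1 x)) -> (forall x, is_derive g1 x (g2 x)) ->
  (forall x, continuous g2 x) -> g 0 = 0 -> g 1 = 0 -> 0 <= x <= 1 ->
  RInt (fun y => green x y * (- g2 y)) 0 1 = g x :> R.
Proof.
  intros D1 D2 C2 G0 G1 Hx.
  assert (Cf : forall y, continuous (fun y => green x y * (- g2 y)) y)
    by (intros y; apply cont_mult; [apply green_cont | apply cont_opp; auto]).
  rewrite <- (RInt_Chasles' (fun y => green x y * (- g2 y)) 0 x 1)
    by (apply (ex_RInt_continuous (V:=R_CompleteNormedModule)); auto).
  rewrite (RInt_ext' _ (fun y => (-(1-x)) * (y * g2 y)) 0 x).
  2: { intros y Hy. rewrite Rmin_left, Rmax_right in Hy by lra.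
       unfold green. rewrite Rmin_right by lra. ring. }
  rewrite (RInt_ext' _ (fun y => (-x) * ((1-y) * g2 y)) x 1).
  2: { intros y Hy. rewrite Rmin_left, Rmax_right in Hy by lra.
       unfold green. rewrite Rmin_left by lra. ring. }
  rewrite (RInt_FTC (fun y => (1-x) * (g y - y * g1 y))); try lra.
  2: { intros y _. apply is_derive_scal' with (a := g1 y - (1 * g1 y + y * g2 y)); [|ring].
       apply is_derive_minus' with (a := g1 y) (b := 1 * g1 y + y * g2 y); auto.
       apply is_derive_mult' with (a := 1) (b := g2 y); auto.
       apply (is_derive_id (K:=R_AbsRing)). }
  2: { intros y _. apply cont_scal, cont_mult; auto. apply continuous_id. }
  rewrite (RInt_FTC (fun y => x * (- ((1-y) * g1 y) - g y))); try lra.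
  2: { intros y _. apply is_derive_scal' with (a := - ((-1) * g1 y + (1-y) * g2 y) - g1 y); [|ring].
       apply is_derive_minus' with (a := - ((-1) * g1 y + (1-y) * g2 y)) (b := g1 y); auto.
       apply (is_derive_opp (fun t => (1-t) * g1 t) y).
       apply is_derive_mult' with (a := -1) (b := g2 y); auto.
       apply is_derive_minus' with (a := 0) (b := 1); [| apply (is_derive_id (K:=R_AbsRing)) | ring].
       apply (is_derive_const (K:=R_AbsRing) (V:=R_NormedModule)). }
  2: { intros y _. apply cont_scal, cont_mult; auto.
       apply cont_minus; [apply cont_const | apply continuous_id]. }
  rewrite G0, G1. ring.
Qed.

Lemma sine_psum_uniform (g g1 g2 : R -> R) (Gb : R) :
  (forall x, is_derive g x (g1 x)) -> (forall x, is_derive g1 x (g2 x)) ->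
  (forall x, continuous g2 x) -> g 0 = 0 -> g 1 = 0 ->
  (forall y, 0 <= y <= 1 -> Rabs (g2 y) <= Gb) ->
  forall N x, 0 <= x <= 1 ->
  Rabs (fsum (fun j => ip g (phi (S j)) * phi (S j) x) N - g x) <= 4 / (PI^2 * (INR N + 1)) * Gb.
Proof.
  intros D1 D2 C2 G0 G1 HGb N x Hx. pose proof PI_RGT_0.
  set (G := fun y => - g2 y).
  assert (CG : forall y, continuous G y) by (intros; apply cont_opp; auto).
  assert (Cpsum : forall y, continuous (fun y => green_psum N x y * G y) y).
  { intros y. apply cont_mult; auto. apply cont_fsum. intros.
    unfold Rdiv. apply cont_mult; [apply cont_scal, phi_cont | apply cont_const]. }
  assert (Hpsum : fsum (fun j => ip g (phi (S j)) * phi (S j) x) N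
                  = RInt (fun y => green_psum N x y * G y) 0 1).
  { unfold green_psum.
    rewrite (RInt_ext' _ (fun y => fsum (fun j => (phi (S j) x / lam (S j)) * (G y * phi (S j) y)) N)).
    2: { intros. rewrite Rmult_comm, <- fsum_scal_l. apply fsum_ext. intros.
         pose proof (lam_pos i). field. lra. }
    rewrite RInt_fsum.
    2: { intros. apply ex_RInt_01. intros. apply cont_scal, cont_mult; auto using phi_cont. }
    apply fsum_ext. intros j _.
    rewrite RInt_scal' by (apply ex_RInt_01; intros; apply cont_mult; auto using phi_cont).
    fold (ip G (phi (S j))). unfold G. rewrite <- (ip_phi_lam g g1 g2); auto.
    pose proof (lam_pos j). field. lra. }
  rewrite Hpsum, <- (green_solves g g1 g2 x D1 D2 C2 G0 G1 Hx). fold G.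
  rewrite <- RInt_minus'.
  2: { apply ex_RInt_01; auto. }
  2: { apply ex_RInt_01; intros. apply cont_mult; auto. apply green_cont. }
  replace (4 / (PI ^ 2 * (INR N + 1)) * Gb) with ((1 - 0) * (4 / (PI ^ 2 * (INR N + 1)) * Gb))
    by ring.
  apply abs_RInt_le_const; [lra| |].
  - apply (ex_RInt_minus (fun y => green_psum N x y * G y) (fun y => green x y * G y));
      apply ex_RInt_01; intros; auto. apply cont_mult; auto. apply green_cont.
  - intros y Hy. rewrite <- Rmult_minus_distr_r, Rabs_mult.
    apply Rmult_le_compat; try apply Rabs_pos; [apply green_psum_approx; auto|].
    unfold G. rewrite Rabs_Ropp. auto.
Qed.

Lemma is_series_from_rate (a : nat -> R) l B :
  (forall N, Rabs (fsum a N - l) <= B / (INR N + 1)) -> is_series a l.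
Proof.
  intros H. change (is_lim_seq (sum_n a) l). apply is_lim_seq_spec. intros eps.
  assert (HB : 0 <= B).
  { specialize (H O). simpl in H. pose proof (Rabs_pos (0 - l)).
    replace B with (B / (0+1)) by field. lra. }
  destruct (INR_unbounded (B / eps)) as [M HM]. exists M. intros n Hn.
  rewrite sum_n_fsum. eapply Rle_lt_trans; [apply H|].
  pose proof (cond_pos eps). assert (INR M <= INR n) by (apply le_INR; lia).
  rewrite S_INR. pose proof (pos_INR n). apply Rlt_div_l; [lra|].
  apply Rlt_div_l in HM; nra.
Qed.

Lemma is_series_ext' (a b : nat -> R) l : (forall n, a n = b n) -> is_series a l -> is_series b l.
Proof. intros H Ha. apply (is_series_ext a b l H Ha). Qed.

Lemma is_series_scal' (a : nat -> R) l c : is_series a l -> is_series (fun n => c * a n) (c * l).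
Proof. intros H. apply (is_series_scal_l c a l H). Qed.

Lemma is_series_plus' (a b : nat -> R) la lb : is_series a la -> is_series b lb ->
  is_series (fun n => a n + b n) (la + lb).
Proof. intros Ha Hb. apply (is_series_plus a b la lb Ha Hb). Qed.

Lemma parseval (h g g1 g2 : R -> R) :
  (forall x, continuous h x) ->
  (forall x, is_derive g x (g1 x)) -> (forall x, is_derive g1 x (g2 x)) ->
  (forall x, continuous g2 x) -> g 0 = 0 -> g 1 = 0 ->
  is_series (fun j => ip h (phi (S j)) * ip g (phi (S j))) (ip h g).
Proof.
  intros Ch D1 D2 C2 G0 G1.
  assert (Cg : forall x, continuous g x) by (intros; eapply is_derive_continuous; apply D1).
  destruct (continuous_bounded_01 h Ch) as [Hb [Hb0 HHb]].
  destruct (continuous_bounded_01 g2 C2) as [Gb [Gb0 HGb]].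
  pose proof PI_RGT_0.
  apply is_series_from_rate with (Hb * (4 / PI^2 * Gb)). intros N.
  set (SN := fun x => fsum (fun j => ip g (phi (S j)) * phi (S j) x) N).
  assert (CSN : forall x, continuous SN x)
    by (intros x; apply cont_fsum; intros; apply cont_scal, phi_cont).
  replace (fsum (fun j => ip h (phi (S j)) * ip g (phi (S j))) N) with (ip h SN).
  2: { unfold ip, SN.
       rewrite (RInt_ext' _ (fun x => fsum (fun j => ip g (phi (S j)) * (h x * phi (S j) x)) N))
         by (intros; rewrite <- fsum_scal_l; apply fsum_ext; intros; ring).
       rewrite RInt_fsum.
       2: { intros. apply ex_RInt_01. intros. apply cont_scal, cont_mult; auto using phi_cont. }
       apply fsum_ext. intros j _.
       rewrite RInt_scal' by (apply ex_RInt_01; intros; apply cont_mult; auto using phi_cont).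
       unfold ip. ring. }
  unfold ip. rewrite <- RInt_minus' by (apply ex_RInt_01; intros; apply cont_mult; auto).
  replace (Hb * (4 / PI ^ 2 * Gb) / (INR N + 1))
    with ((1 - 0) * (Hb * (4 / (PI^2 * (INR N + 1)) * Gb)))
    by (field; pose proof (pos_INR N); split; lra).
  apply abs_RInt_le_const; [lra| |].
  - apply (ex_RInt_minus (fun x => h x * SN x) (fun x => h x * g x));
      apply ex_RInt_01; intros; apply cont_mult; auto.
  - intros x Hx. rewrite <- Rmult_minus_distr_l, Rabs_mult.
    apply Rmult_le_compat; try apply Rabs_pos; auto.
    apply (sine_psum_uniform g g1 g2); auto.
Qed.

(** * Test functions and the moment series [sum_j lam_j^n c_j] *)

Lemma test_fun_is_derive mu : test_fun mu ->
  forall i x, is_derive (Derive_n mu i) x (Derive_n mu (S i) x).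
Proof. intros [Hd _] i x. apply Derive_correct, (Hd (S i) x). Qed.

Lemma test_fun_cont mu : test_fun mu -> forall i x, continuous (Derive_n mu i) x.
Proof. intros H i x. eapply is_derive_continuous. apply test_fun_is_derive; auto. Qed.

Lemma test_fun_cont0 mu : test_fun mu -> forall x, continuous mu x.
Proof. intros H. exact (test_fun_cont mu H 0). Qed.

Lemma test_fun_support mu : test_fun mu -> exists a b, 0 < a /\ a < b /\ b < 1 /\
  forall i x, (x < a \/ b < x) -> Derive_n mu i x = 0.
Proof.
  intros [_ [a [b [Ha [Hab [Hb Hz]]]]]]. exists a, b. repeat split; auto.
  intros i x Hx. rewrite (Derive_n_ext_loc mu (fun _ => 0)).
  - destruct i; [reflexivity | apply Derive_n_const].
  - destruct Hx as [Hx|Hx].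
    + apply (locally_open (fun u => u < a)); [apply open_lt | intros; apply Hz; auto | auto].
    + apply (locally_open (fun u => b < u)); [apply open_gt | intros; apply Hz; auto | auto].
Qed.

Lemma test_fun_lin f g a n x : test_fun f -> test_fun g ->
  Derive_n (fun y => a * f y + g y) n x = a * Derive_n f n x + Derive_n g n x.
Proof.
  intros [Hf _] [Hg _]. rewrite Derive_n_plus, Derive_n_scal_l; auto;
    apply filter_forall; intros y k _; [apply ex_derive_n_scal_l, Hf | apply Hg].
Qed.

Lemma Leibniz_expansion (w : R -> R) : Smooth w -> forall n, exists W : nat -> R -> R,
  (forall i, Smooth (W i)) /\ (forall x, W n x = w x) /\
  (forall i x, (n < i)%nat -> W i x = 0) /\
  forall mu, test_fun mu -> forall x,
    Derive_n (fun x => mu x * w x) n x = fsum (fun i => W i x * Derive_n mu i x) (S n).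
Proof.
  intros Hw n. induction n as [|n [W [HWs [HWn [HW0 HWe]]]]].
  - exists (fun i => match i with O => w | S _ => fun _ => 0 end). repeat split.
    + intros [|i]; auto. apply Smooth_const.
    + intros [|i] x Hi; [lia | auto].
    + intros mu _ x. simpl. ring.
  - exists (fun i x => Derive (W i) x + match i with O => 0 | S k => W k x end).
    repeat split.
    + intros [|i].
      * eapply Smooth_ext; [|apply (Smooth_plus _ _ (Smooth_Derive _ (HWs O)) (Smooth_const 0))].
        intros; auto.
      * apply (Smooth_plus _ _ (Smooth_Derive _ (HWs (S i))) (HWs i)).
    + intros x. rewrite Derive_zero, HWn; [ring|]. intros; apply HW0; lia.
    + intros [|i] x Hi; [lia|]. rewrite Derive_zero, HW0; [ring | lia |].
      intros; apply HW0; lia.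
    + intros mu Hmu x. simpl Derive_n at 1.
      rewrite (Derive_ext _ (fun x => fsum (fun i => W i x * Derive_n mu i x) (S n)))
        by (intros; apply HWe; auto).
      rewrite (is_derive_unique _ x (fsum (fun i => Derive (W i) x * Derive_n mu i x
                                              + W i x * Derive_n mu (S i) x) (S n))).
      2: { apply (is_derive_fsum (fun i x => W i x * Derive_n mu i x)
               (fun i x => Derive (W i) x * Derive_n mu i x + W i x * Derive_n mu (S i) x)).
           intros i _. apply is_derive_mult' with (a := Derive (W i) x) (b := Derive_n mu (S i) x);
             [apply Smooth_is_derive; auto | apply test_fun_is_derive; auto | auto]. }
      rewrite fsum_plus.
      rewrite (fsum_ext (fun i => (Derive (W i) x + match i with O => 0 | S k => W k x end)
                                  * Derive_n mu i x)
         (fun i => Derive (W i) x * Derive_n mu i x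
                   + match i with O => 0 | S k => W k x * Derive_n mu i x end))
        by (intros [|i] _; ring).
      rewrite fsum_plus, (fsum_shift (fun i => match i with O => 0 | S k => W k x * Derive_n mu i x end)).
      change (fsum (fun i => Derive (W i) x * Derive_n mu i x) (S (S n))) with
        (fsum (fun i => Derive (W i) x * Derive_n mu i x) (S n)
         + Derive (W (S n)) x * Derive_n mu (S n) x).
      rewrite (Derive_zero (W (S n))) by (intros; apply HW0; lia). ring.
Qed.

Section Product.

Variables (mu w : R -> R).
Hypothesis mu_test : test_fun mu.
Hypothesis w_smooth : Smooth w.

Let F x := mu x * w x.

Lemma product_is_derive n x : is_derive (Derive_n F n) x (Derive_n F (S n) x).
Proof.
  apply Derive_correct. destruct (Leibniz_expansion w w_smooth n) as [W [HWs [_ [_ HWe]]]].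
  apply (ex_derive_ext (fun x => fsum (fun i => W i x * Derive_n mu i x) (S n)));
    [intros; symmetry; apply HWe; auto|].
  eexists. apply (is_derive_fsum (fun i x => W i x * Derive_n mu i x)
    (fun i x => Derive (W i) x * Derive_n mu i x + W i x * Derive_n mu (S i) x)).
  intros i _. apply is_derive_mult' with (a := Derive (W i) x) (b := Derive_n mu (S i) x);
    [apply Smooth_is_derive; auto | apply test_fun_is_derive; auto | auto].
Qed.

Lemma product_cont n x : continuous (Derive_n F n) x.
Proof. eapply is_derive_continuous, product_is_derive. Qed.

Lemma product_boundary n : Derive_n F n 0 = 0 /\ Derive_n F n 1 = 0.
Proof.
  destruct (test_fun_support mu mu_test) as [a [b [Ha [Hab [Hb Hz]]]]].
  destruct (Leibniz_expansion w w_smooth n) as [W [_ [_ [_ HWe]]]]. unfold F.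
  rewrite !HWe by auto. split; apply fsum_zero; intros; rewrite Hz by lra; ring.
Qed.

Lemma lam_pow_ip j n : lam j ^ n * ip F (phi j) = (-1) ^ n * ip (Derive_n F (2*n)) (phi j).
Proof.
  induction n as [|n IH]; [simpl; ring_simplify; reflexivity|].
  replace (2 * S n)%nat with (S (S (2*n))) by lia.
  transitivity (lam j * (lam j ^ n * ip F (phi j))); [simpl; ring|].
  destruct (product_boundary (2*n)) as [Z0 Z1].
  rewrite IH.
  transitivity ((-1) ^ n * (ip (Derive_n F (2*n)) (phi j) * lam j)); [ring|].
  rewrite (ip_phi_lam (Derive_n F (2*n)) (Derive_n F (S (2*n))) (Derive_n F (S (S (2*n)))));
    auto using product_is_derive, product_cont.
  rewrite ip_opp by auto using product_cont, phi_cont. simpl. ring.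
Qed.

End Product.

Lemma ip_Derive_n_transfer f g w1 w2 : test_fun f -> test_fun g -> Smooth w1 -> Smooth w2 ->
  forall k a b,
  ip (Derive_n (fun x => f x * w1 x) (a + k)) (Derive_n (fun x => g x * w2 x) b) =
  (-1)^k * ip (Derive_n (fun x => f x * w1 x) a) (Derive_n (fun x => g x * w2 x) (b + k)).
Proof.
  intros Hf Hg H1 H2 k a. induction k as [|k IH]; intros b.
  - rewrite !Nat.add_0_r. simpl. ring.
  - replace (a + S k)%nat with (S (a + k)) by lia.
    replace (b + S k)%nat with (S b + k)%nat by lia.
    destruct (product_boundary f w1 Hf H1 (a+k)) as [Z0 Z1].
    rewrite ip_ibp with (u := Derive_n (fun x => f x * w1 x) (a + k))
                        (v' := Derive_n (fun x => g x * w2 x) (S b));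
      auto using product_is_derive, product_cont; [|rewrite Z0; ring | rewrite Z1; ring].
    rewrite IH. simpl. ring.
Qed.

(* [lam_j^n <F, phi_j> = (-1)^n <F^(2n), phi_j>], then Parseval, then [n] integrations by parts
   move half of the derivatives from [F] to [G]. *)
Lemma lam_pow_series f g w1 w2 n : test_fun f -> test_fun g -> Smooth w1 -> Smooth w2 ->
  is_series (fun j => lam (S j) ^ n *
               (ip (fun x => f x * w1 x) (phi (S j)) * ip (fun x => g x * w2 x) (phi (S j))))
    (ip (Derive_n (fun x => f x * w1 x) n) (Derive_n (fun x => g x * w2 x) n)).
Proof.
  intros Hf Hg H1 H2.
  set (F := fun x => f x * w1 x). set (G := fun x => g x * w2 x).
  destruct (product_boundary g w2 Hg H2 0) as [Z0 Z1].
  pose proof (parseval (Derive_n F (2*n)) G (Derive_n G 1) (Derive_n G 2)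
                (product_cont f w1 Hf H1 (2*n)) (product_is_derive g w2 Hg H2 0)
                (product_is_derive g w2 Hg H2 1) (product_cont g w2 Hg H2 2) Z0 Z1) as P.
  apply (is_series_scal' _ _ ((-1)^n)) in P.
  replace ((-1)^n * ip (Derive_n F (2*n)) G) with (ip (Derive_n F n) (Derive_n G n)) in P.
  - eapply is_series_ext'; [|apply P]. intros j.
    pose proof (lam_pow_ip f w1 Hf H1 (S j) n) as L. fold F in L.
    rewrite <- !Rmult_assoc, L. ring.
  - replace (2*n)%nat with (n + n)%nat by lia.
    pose proof (ip_Derive_n_transfer f g w1 w2 Hf Hg H1 H2 n n 0) as HP. fold F G in HP.
    change (ip (Derive_n F (n + n)) G) with (ip (Derive_n F (n + n)) (Derive_n G 0)).
    rewrite HP. simpl. rewrite <- Rmult_assoc, <- Rpow_mult_distr.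
    replace ((-1)*(-1)) with 1 by ring. rewrite pow1. ring.
Qed.

(** * [A^p_K] as a combination of moments *)

Definition monic_of_degree d (F : R -> R) :=
  exists a : nat -> R, forall l, F l = fsum (fun n => a n * l ^ n) d + l ^ d.

Lemma monic_of_degree_ext d F G : (forall l, F l = G l) -> monic_of_degree d F -> monic_of_degree d G.
Proof. intros H [a Ha]. exists a. intros l. rewrite <- H. auto. Qed.

Lemma monic_of_degree_mul_linear d F r :
  monic_of_degree d F -> monic_of_degree (S d) (fun l => F l * (l - r)).
Proof.
  intros [a Ha].
  exists (fun n => (match n with O => 0 | S k => a k end) - r * (if Nat.eqb n d then 1 else a n)).
  intros l. rewrite Ha.
  rewrite (fsum_ext (fun n => ((match n with O => 0 | S k => a k end)
                              - r * (if Nat.eqb n d then 1 else a n)) * l^n)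
                    (fun n => (match n with O => 0 | S k => a k end) * l^n
                      + (-r) * ((if Nat.eqb n d then 1 else a n) * l^n))) by (intros; ring).
  rewrite fsum_plus, fsum_scal_l, fsum_shift.
  change (fsum (fun n => (if Nat.eqb n d then 1 else a n) * l ^ n) (S d)) with
    (fsum (fun n => (if Nat.eqb n d then 1 else a n) * l ^ n) d
     + (if Nat.eqb d d then 1 else a d) * l ^ d).
  rewrite Nat.eqb_refl.
  rewrite (fsum_ext (fun n => (if Nat.eqb n d then 1 else a n) * l ^ n) (fun n => a n * l^n))
    by (intros i Hi; destruct (Nat.eqb_spec i d); [lia | auto]).
  rewrite (fsum_ext (fun i => match S i with O => 0 | S k => a k end * l ^ S i)
                    (fun i => l * (a i * l^i))) by (intros; simpl; ring).
  rewrite fsum_scal_l. simpl. ring.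
Qed.

Lemma monic_of_degree_mul_pow d F r k :
  monic_of_degree d F -> monic_of_degree (d + k) (fun l => F l * (l - r) ^ k).
Proof.
  intros H. induction k as [|k IH].
  - rewrite Nat.add_0_r. eapply monic_of_degree_ext; [|apply H]. intros; simpl; ring.
  - replace (d + S k)%nat with (S (d + k)) by lia.
    eapply monic_of_degree_ext; [|apply (monic_of_degree_mul_linear _ _ r IH)].
    intros; simpl; ring.
Qed.

Definition A_poly K p l :=
  (-1) ^ (p - 1) * ((l - (lam 1 + lam K) / 2) * (lam K - l) ^ (p - 1) * (l - lam 1) ^ (p - 1)).

Lemma A_poly_monic K p : (1 <= p)%nat -> monic_of_degree (2*p-1) (A_poly K p).
Proof.
  intros Hp.
  assert (M1 : monic_of_degree 1 (fun l => l - (lam 1 + lam K)/2)).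
  { eapply monic_of_degree_ext;
      [|apply (monic_of_degree_mul_linear 0 (fun _ => 1) ((lam 1 + lam K)/2))].
    - intros; simpl; ring.
    - exists (fun _ => 0). intros; simpl; ring. }
  pose proof (monic_of_degree_mul_pow _ _ (lam 1) (p-1)
                (monic_of_degree_mul_pow _ _ (lam K) (p-1) M1)) as M3.
  replace (2*p-1)%nat with (1 + (p-1) + (p-1))%nat by lia.
  eapply monic_of_degree_ext; [|apply M3]. intros l. unfold A_poly.
  replace ((lam K - l)^(p-1)) with ((-1)^(p-1) * (l - lam K)^(p-1))
    by (rewrite <- Rpow_mult_distr; f_equal; ring).
  assert (E : (-1)^(p-1) * (-1)^(p-1) = 1).
  { rewrite <- Rpow_mult_distr. replace ((-1)*(-1)) with 1 by ring. apply pow1. }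
  transitivity ((-1)^(p-1) * (-1)^(p-1)
                * ((l - (lam 1 + lam K) / 2) * (l - lam K)^(p-1) * (l - lam 1)^(p-1)));
    [rewrite E|]; ring.
Qed.

Lemma is_series_fsum (u : nat -> nat -> R) (v : nat -> R) d :
  (forall n, (n < d)%nat -> is_series (u n) (v n)) ->
  is_series (fun j => fsum (fun n => u n j) d) (fsum v d).
Proof.
  induction d as [|d IH]; intros H; simpl.
  - apply is_series_from_rate with 0. intros N. rewrite fsum_zero by auto.
    rewrite Rminus_0_r, Rabs_R0. unfold Rdiv. rewrite Rmult_0_l. lra.
  - apply is_series_plus'; [apply IH; intros|]; apply H; lia.
Qed.

Definition c_pair K f g j :=
  ip (fun x => f x * phi 1 x) (phi j) * ip (fun x => g x * phi K x) (phi j).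

Definition moment K f g n :=
  ip (Derive_n (fun x => f x * phi 1 x) n) (Derive_n (fun x => g x * phi K x) n).

Lemma A_poly_series K p a f g :
  (forall l, A_poly K p l = fsum (fun n => a n * l ^ n) (2*p-1) + l ^ (2*p-1)) ->
  test_fun f -> test_fun g ->
  is_series (fun j => A_poly K p (lam (S j)) * c_pair K f g (S j))
    (fsum (fun n => a n * moment K f g n) (2*p-1) + moment K f g (2*p-1)).
Proof.
  intros Ha Hf Hg.
  eapply is_series_ext'; [|apply is_series_plus'].
  3: apply (lam_pow_series f g (phi 1) (phi K) (2*p-1) Hf Hg (phi_smooth 1) (phi_smooth K)).
  2: apply (is_series_fsum (fun n j => a n * (lam (S j) ^ n * c_pair K f g (S j)))).
  - intros j. rewrite Ha, Rmult_plus_distr_r, <- fsum_scal_r. f_equal.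
    apply fsum_ext. intros; ring.
  - intros n _. apply is_series_scal'.
    apply (lam_pow_series f g (phi 1) (phi K) n Hf Hg (phi_smooth 1) (phi_smooth K)).
Qed.

Lemma c_pair_lin_l K f g h a j : test_fun f -> test_fun g ->
  c_pair K (fun x => a * f x + g x) h j = a * c_pair K f h j + c_pair K g h j.
Proof.
  intros Hf Hg. pose proof (test_fun_cont0 f Hf). pose proof (test_fun_cont0 g Hg).
  unfold c_pair, ip.
  rewrite (RInt_ext' (fun x => (a * f x + g x) * phi 1 x * phi j x)
             (fun x => a * (f x * phi 1 x * phi j x) + g x * phi 1 x * phi j x)) by (intros; ring).
  rewrite RInt_plus', RInt_scal'; try ring;
    apply ex_RInt_01; intros; try apply cont_scal;
    (apply cont_mult; [apply cont_mult|]); auto using phi_cont.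
Qed.

Lemma c_pair_lin_r K f g h a j : test_fun f -> test_fun g ->
  c_pair K h (fun x => a * f x + g x) j = a * c_pair K h f j + c_pair K h g j.
Proof.
  intros Hf Hg. pose proof (test_fun_cont0 f Hf). pose proof (test_fun_cont0 g Hg).
  unfold c_pair, ip.
  rewrite (RInt_ext' (fun x => (a * f x + g x) * phi K x * phi j x)
             (fun x => a * (f x * phi K x * phi j x) + g x * phi K x * phi j x)) by (intros; ring).
  rewrite RInt_plus', RInt_scal'; try ring;
    apply ex_RInt_01; intros; try apply cont_scal;
    (apply cont_mult; [apply cont_mult|]); auto using phi_cont.
Qed.

(** * Bounds by the [H^m] norm *)

Definition dominated_by_H m (q : (R -> R) -> R) :=
  exists C, 0 <= C /\ forall mu, test_fun mu -> Rabs (q mu) <= C * Hnorm2 m mu.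

Lemma ex_RInt_Derive_n_sq mu k : test_fun mu -> ex_RInt (fun x => Derive_n mu k x ^ 2) 0 1.
Proof.
  intros H. apply ex_RInt_01. intros.
  apply (continuous_ext (fun x => Derive_n mu k x * Derive_n mu k x)); [intros; simpl; ring|].
  apply cont_mult; apply test_fun_cont; auto.
Qed.

Lemma RInt_Derive_n_sq_nonneg mu k : test_fun mu -> 0 <= RInt (fun x => Derive_n mu k x ^ 2) 0 1.
Proof.
  intros H. apply RInt_ge_0; [lra | apply ex_RInt_Derive_n_sq; auto | intros; nra].
Qed.

Lemma Hnorm2_nonneg mu m : test_fun mu -> 0 <= Hnorm2 m mu.
Proof.
  intros H. unfold Hnorm2. induction m as [|m IH]; cbn [sum_f_R0];
    [|pose proof (RInt_Derive_n_sq_nonneg mu (S m) H)]; auto using RInt_Derive_n_sq_nonneg; lra.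
Qed.

Lemma RInt_Derive_n_sq_le_Hnorm2 mu m k : test_fun mu -> (k <= m)%nat ->
  RInt (fun x => Derive_n mu k x ^ 2) 0 1 <= Hnorm2 m mu.
Proof.
  intros H. induction m as [|m IH]; intros Hk.
  - replace k with O by lia. unfold Hnorm2. cbn [sum_f_R0]. lra.
  - pose proof (Hnorm2_nonneg mu m H) as Hm. unfold Hnorm2 in *. cbn [sum_f_R0].
    destruct (Nat.eq_dec k (S m)) as [->|Hne]; [lra|].
    pose proof (IH ltac:(lia)). pose proof (RInt_Derive_n_sq_nonneg mu (S m) H). lra.
Qed.

Lemma Rabs_RInt_le_01 (f g : R -> R) : ex_RInt f 0 1 -> ex_RInt g 0 1 ->
  (forall x, 0 < x < 1 -> Rabs (f x) <= g x) -> Rabs (RInt f 0 1) <= RInt g 0 1.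
Proof.
  intros Hf Hg H. apply Rabs_le. split.
  - rewrite <- Ropp_involutive, <- (RInt_opp f) by auto. apply Ropp_le_contravar.
    apply RInt_le; [lra | apply (ex_RInt_opp f); auto | auto |].
    intros x Hx. specialize (H x Hx). apply Rabs_le_between in H. unfold opp; simpl. lra.
  - apply RInt_le; [lra | auto | auto |].
    intros x Hx. specialize (H x Hx). apply Rabs_le_between in H. lra.
Qed.

Lemma Rabs_mult_le_half_sq u v : Rabs u * Rabs v <= (u^2 + v^2)/2.
Proof.
  rewrite <- Rabs_mult. destruct (Rle_dec 0 (u*v)).
  - rewrite Rabs_right by lra. pose proof (pow2_ge_0 (u - v)). nra.
  - rewrite Rabs_left by lra. pose proof (pow2_ge_0 (u + v)). nra.
Qed.

Lemma dominated_by_H_fsum (q : nat -> (R -> R) -> R) n m :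
  (forall i, (i < n)%nat -> dominated_by_H m (q i)) ->
  dominated_by_H m (fun mu => fsum (fun i => q i mu) n).
Proof.
  induction n as [|n IH]; intros H.
  - exists 0. split; [lra|]. intros mu _. simpl. rewrite Rabs_R0, Rmult_0_l. lra.
  - destruct IH as [C1 [HC1 H1]]; [intros; apply H; lia|].
    destruct (H n ltac:(lia)) as [C2 [HC2 H2]].
    exists (C1 + C2). split; [lra|]. intros mu Hmu. simpl.
    eapply Rle_trans; [apply Rabs_triang|].
    specialize (H1 mu Hmu). specialize (H2 mu Hmu). lra.
Qed.

Lemma dominated_by_H_weighted (U : R -> R) i l m : (forall x, continuous U x) ->
  (i <= m)%nat -> (l <= m)%nat ->
  dominated_by_H m (fun mu => RInt (fun x => U x * Derive_n mu i x * Derive_n mu l x) 0 1).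
Proof.
  intros HU Hi Hl. destruct (continuous_bounded_01 U HU) as [Ub [Ub0 HUb]].
  exists Ub. split; auto. intros mu Hmu.
  pose proof (test_fun_cont mu Hmu) as Cmu.
  pose proof (ex_RInt_plus _ _ 0 1 (ex_RInt_Derive_n_sq mu i Hmu) (ex_RInt_Derive_n_sq mu l Hmu))
    as Hsq.
  eapply Rle_trans.
  - apply Rabs_RInt_le_01
      with (g := fun x => (Ub / 2) * (Derive_n mu i x ^ 2 + Derive_n mu l x ^ 2)).
    + apply ex_RInt_01. intros. repeat apply cont_mult; auto.
    + apply (ex_RInt_scal (fun x => Derive_n mu i x ^ 2 + Derive_n mu l x ^ 2)). apply Hsq.
    + intros x Hx. rewrite !Rabs_mult. assert (Rabs (U x) <= Ub) by (apply HUb; lra).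
      pose proof (Rabs_mult_le_half_sq (Derive_n mu i x) (Derive_n mu l x)).
      pose proof (Rabs_pos (Derive_n mu i x)). pose proof (Rabs_pos (Derive_n mu l x)).
      pose proof (Rabs_pos (U x)). nra.
  - rewrite RInt_scal', RInt_plus' by (auto using ex_RInt_Derive_n_sq).
    pose proof (RInt_Derive_n_sq_le_Hnorm2 mu m i Hmu Hi).
    pose proof (RInt_Derive_n_sq_le_Hnorm2 mu m l Hmu Hl). nra.
Qed.

Lemma dominated_by_H_expansions (W V : nat -> R -> R) nW nV m :
  (forall i x, continuous (W i) x) -> (forall i x, continuous (V i) x) ->
  (nW <= S m)%nat -> (nV <= S m)%nat ->
  dominated_by_H m (fun mu => RInt (fun x => fsum (fun i => W i x * Derive_n mu i x) nW
                                          * fsum (fun l => V l x * Derive_n mu l x) nV) 0 1).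
Proof.
  intros CW CV HnW HnV.
  set (T := fun i l mu => RInt (fun x => (W i x * V l x) * Derive_n mu i x * Derive_n mu l x) 0 1).
  destruct (dominated_by_H_fsum (fun i mu => fsum (fun l => T i l mu) nV) nW m) as [C [HC HCb]].
  { intros i Hi. apply dominated_by_H_fsum. intros l Hl.
    apply dominated_by_H_weighted; [intros; apply cont_mult; auto | lia | lia]. }
  exists C. split; auto. intros mu Hmu. pose proof (test_fun_cont mu Hmu).
  rewrite (RInt_ext' _ (fun x => fsum (fun i => fsum (fun l =>
             (W i x * V l x) * Derive_n mu i x * Derive_n mu l x) nV) nW)).
  2: { intros x _. rewrite <- fsum_scal_r. apply fsum_ext. intros i _.
       rewrite <- fsum_scal_l. apply fsum_ext. intros; ring. }
  rewrite RInt_fsum.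
  - erewrite fsum_ext; [apply HCb; auto|]. intros i _. rewrite RInt_fsum; [reflexivity|].
    intros; apply ex_RInt_01; intros. repeat apply cont_mult; auto.
  - intros; apply ex_RInt_01; intros. apply cont_fsum. intros. repeat apply cont_mult; auto.
Qed.

Lemma RInt_weighted_ibp (U mu : R -> R) l m : Smooth U -> test_fun mu ->
  RInt (fun x => U x * Derive_n mu (S m) x * Derive_n mu l x) 0 1 =
  - (RInt (fun x => Derive U x * Derive_n mu m x * Derive_n mu l x) 0 1
     + RInt (fun x => U x * Derive_n mu m x * Derive_n mu (S l) x) 0 1).
Proof.
  intros HU Hmu.
  assert (CU := Smooth_cont U HU). assert (CU' := Smooth_cont _ (Smooth_Derive U HU)).
  pose proof (test_fun_cont mu Hmu) as Cmu.
  destruct (test_fun_support mu Hmu) as [a [b [Ha [Hab [Hb Hz]]]]].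
  pose proof (ip_ibp (Derive_n mu m) (Derive_n mu (S m)) (fun x => U x * Derive_n mu l x)
    (fun x => Derive U x * Derive_n mu l x + U x * Derive_n mu (S l) x)) as HI.
  unfold ip in HI.
  rewrite (RInt_ext' (fun x => U x * Derive_n mu (S m) x * Derive_n mu l x)
             (fun x => Derive_n mu (S m) x * (U x * Derive_n mu l x))) by (intros; ring).
  rewrite HI, <- RInt_plus'.
  - f_equal. apply RInt_ext'. intros; ring.
  - apply ex_RInt_01; intros; repeat apply cont_mult; auto.
  - apply ex_RInt_01; intros; repeat apply cont_mult; auto.
  - apply test_fun_is_derive; auto.
  - intros x. apply is_derive_mult' with (a := Derive U x) (b := Derive_n mu (S l) x);
      [apply Smooth_is_derive | apply test_fun_is_derive | ]; auto.
  - auto.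
  - intros x. apply cont_plus; apply cont_mult; auto.
  - rewrite (Hz m 0) by lra. ring.
  - rewrite (Hz m 1) by lra. ring.
Qed.

(* For [l = m], [RInt_weighted_ibp] expresses the integral through itself: it equals
   [- 1/2 RInt U' (mu^(m))^2]. *)
Lemma dominated_by_H_top (U : R -> R) l m : Smooth U -> (l < S m)%nat ->
  dominated_by_H m (fun mu => RInt (fun x => U x * Derive_n mu (S m) x * Derive_n mu l x) 0 1).
Proof.
  intros HU Hl.
  assert (CU := Smooth_cont U HU). assert (CU' := Smooth_cont _ (Smooth_Derive U HU)).
  pose proof (fun mu => RInt_weighted_ibp U mu l m HU) as IBP.
  destruct (Nat.eq_dec l m) as [->|Hne].
  - destruct (dominated_by_H_weighted (Derive U) m m m CU' (le_n _) (le_n _)) as [C [HC HCb]].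
    exists (C/2). split; [lra|]. intros mu Hmu. specialize (IBP mu Hmu).
    rewrite (RInt_ext' (fun x => U x * Derive_n mu m x * Derive_n mu (S m) x)
               (fun x => U x * Derive_n mu (S m) x * Derive_n mu m x)) in IBP by (intros; ring).
    replace (RInt (fun x => U x * Derive_n mu (S m) x * Derive_n mu m x) 0 1)
      with (- (RInt (fun x => Derive U x * Derive_n mu m x * Derive_n mu m x) 0 1) / 2) by lra.
    unfold Rdiv. rewrite Rabs_mult, Rabs_Ropp, (Rabs_right (/2)) by lra.
    specialize (HCb mu Hmu). lra.
  - destruct (dominated_by_H_weighted (Derive U) m l m CU' (le_n _) ltac:(lia)) as [C1 [HC1 H1]].
    destruct (dominated_by_H_weighted U m (S l) m CU (le_n _) ltac:(lia)) as [C2 [HC2 H2]].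
    exists (C1 + C2). split; [lra|]. intros mu Hmu. rewrite IBP, Rabs_Ropp by auto.
    eapply Rle_trans; [apply Rabs_triang|].
    specialize (H1 mu Hmu). specialize (H2 mu Hmu). lra.
Qed.

Lemma moment_low K n m : (n <= m)%nat -> dominated_by_H m (fun mu => moment K mu mu n).
Proof.
  intros Hnm.
  destruct (Leibniz_expansion (phi 1) (phi_smooth 1) n) as [W [HWs [_ [_ HWe]]]].
  destruct (Leibniz_expansion (phi K) (phi_smooth K) n) as [V [HVs [_ [_ HVe]]]].
  destruct (dominated_by_H_expansions W V (S n) (S n) m) as [C [HC HCb]];
    [intros; apply Smooth_cont; auto | intros; apply Smooth_cont; auto | lia | lia |].
  exists C. split; auto. intros mu Hmu. unfold moment, ip.
  erewrite RInt_ext'; [apply HCb; auto|]. intros. cbv beta. rewrite HWe, HVe; auto.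
Qed.

(* Writing [(mu phi_1)^(m+1) = mu^(m+1) phi_1 + R1] and [(mu phi_K)^(m+1) = mu^(m+1) phi_K + R2]
   with [R1], [R2] of order [m], the only product of order [2(m+1)] is the leading term. *)
Lemma moment_top K m : dominated_by_H m (fun mu =>
  moment K mu mu (S m) - ip (fun x => Derive_n mu (S m) x ^ 2 * phi 1 x) (phi K)).
Proof.
  destruct (Leibniz_expansion (phi 1) (phi_smooth 1) (S m)) as [W [HWs [HWn [_ HWe]]]].
  destruct (Leibniz_expansion (phi K) (phi_smooth K) (S m)) as [V [HVs [HVn [_ HVe]]]].
  assert (CW : forall i x, continuous (W i) x) by (intros; apply Smooth_cont; auto).
  assert (CV : forall i x, continuous (V i) x) by (intros; apply Smooth_cont; auto).
  set (U := fun l x => phi 1 x * V l x + phi K x * W l x).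
  destruct (dominated_by_H_expansions W V (S m) (S m) m CW CV (le_n _) (le_n _))
    as [C1 [HC1 H1]].
  destruct (dominated_by_H_fsum (fun l mu =>
              RInt (fun x => U l x * Derive_n mu (S m) x * Derive_n mu l x) 0 1) (S m) m)
    as [C2 [HC2 H2]].
  { intros l Hl. apply dominated_by_H_top; auto.
    apply Smooth_plus; apply Smooth_mult; auto; apply phi_smooth. }
  assert (CU : forall l x, continuous (U l) x)
    by (intros; apply cont_plus; apply cont_mult; auto using phi_cont).
  exists (C1 + C2). split; [lra|]. intros mu Hmu. cbv beta.
  pose proof (test_fun_cont mu Hmu) as CD.
  set (R1 := fun x => fsum (fun i => W i x * Derive_n mu i x) (S m)).
  set (R2 := fun x => fsum (fun i => V i x * Derive_n mu i x) (S m)).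
  assert (CR1 : forall x, continuous R1 x) by (intros; apply cont_fsum; intros; apply cont_mult; auto).
  assert (CR2 : forall x, continuous R2 x) by (intros; apply cont_fsum; intros; apply cont_mult; auto).
  replace (moment K mu mu (S m) - ip (fun x => Derive_n mu (S m) x ^ 2 * phi 1 x) (phi K))
    with (RInt (fun x => R1 x * R2 x) 0 1
          + fsum (fun l => RInt (fun x => U l x * Derive_n mu (S m) x * Derive_n mu l x) 0 1) (S m)).
  - eapply Rle_trans; [apply Rabs_triang|].
    specialize (H1 mu Hmu). specialize (H2 mu Hmu). cbv beta in H2. unfold R1, R2. lra.
  - unfold moment, ip. rewrite <- RInt_fsum, <- RInt_minus', <- RInt_plus'.
    + apply RInt_ext'. intros x _.
      rewrite HWe, HVe, !(fsum_S _ (S m)), HWn, HVn by auto.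
      rewrite (fsum_ext (fun l => U l x * Derive_n mu (S m) x * Derive_n mu l x)
        (fun l => (phi 1 x * Derive_n mu (S m) x) * (V l x * Derive_n mu l x)
                  + (phi K x * Derive_n mu (S m) x) * (W l x * Derive_n mu l x)))
        by (intros; unfold U; ring).
      rewrite fsum_plus, !fsum_scal_l. unfold R1, R2. ring.
    + apply ex_RInt_01; intros; apply cont_mult; auto.
    + apply ex_RInt_01; intros; apply cont_fsum; intros; repeat apply cont_mult; auto.
    + apply ex_RInt_01; intros; apply cont_mult; apply product_cont; auto; apply phi_smooth.
    + apply ex_RInt_01; intros. apply cont_mult; [|apply phi_cont].
      apply (continuous_ext (fun x => Derive_n mu (S m) x * Derive_n mu (S m) x * phi 1 x));
        [intros; simpl; ring|].
      apply cont_mult; [apply cont_mult|]; auto using phi_cont.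
    + intros; apply ex_RInt_01; intros. apply cont_mult; [apply cont_mult|]; auto.
Qed.

Lemma dominated_by_H_plus m q1 q2 : dominated_by_H m q1 -> dominated_by_H m q2 ->
  dominated_by_H m (fun mu => q1 mu + q2 mu).
Proof.
  intros [C1 [HC1 H1]] [C2 [HC2 H2]]. exists (C1 + C2). split; [lra|].
  intros mu Hmu. eapply Rle_trans; [apply Rabs_triang|].
  specialize (H1 mu Hmu). specialize (H2 mu Hmu). lra.
Qed.

Lemma dominated_by_H_scal m c q : dominated_by_H m q -> dominated_by_H m (fun mu => c * q mu).
Proof.
  intros [C [HC H]]. exists (Rabs c * C). split; [apply Rmult_le_pos; auto; apply Rabs_pos|].
  intros mu Hmu. rewrite Rabs_mult, Rmult_assoc.
  apply Rmult_le_compat_l; [apply Rabs_pos | auto].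
Qed.

Lemma Series_lin (u v : nat -> R) a : ex_series u -> ex_series v ->
  Series (fun j => a * u j + v j) = a * Series u + Series v.
Proof.
  intros Hu Hv. rewrite Series_plus, Series_scal_l; auto.
  destruct Hu as [l Hl]. exists (a * l). apply is_series_scal', Hl.
Qed.

Definition A_form K p f g := Series (fun j => A_poly K p (lam (S j)) * c_pair K f g (S j)).

Definition lead_form K p f g :=
  ip (fun x => Derive_n f (2*p-1) x * Derive_n g (2*p-1) x * phi 1 x) (phi K).

Definition Q_form K p f g := A_form K p f g - lead_form K p f g.

Lemma A_series_A_poly K p mu j : A_series K p mu j = A_poly K p (lam (S j)) * c_pair K mu mu (S j).
Proof. unfold A_series, A_term, A_poly, c_pair, c_coef. ring. Qed.

Lemma ex_series_A_poly K p f g : (1 <= p)%nat -> test_fun f -> test_fun g ->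
  ex_series (fun j => A_poly K p (lam (S j)) * c_pair K f g (S j)).
Proof.
  intros Hp Hf Hg. destruct (A_poly_monic K p Hp) as [a Ha].
  eexists. apply A_poly_series; auto.
Qed.

Lemma lead_form_lin_l K p f g h a : test_fun f -> test_fun g -> test_fun h ->
  lead_form K p (fun x => a * f x + g x) h = a * lead_form K p f h + lead_form K p g h.
Proof.
  intros Hf Hg Hh. unfold lead_form, ip.
  rewrite (RInt_ext' _ (fun x => a * (Derive_n f (2*p-1) x * Derive_n h (2*p-1) x * phi 1 x * phi K x)
                          + Derive_n g (2*p-1) x * Derive_n h (2*p-1) x * phi 1 x * phi K x))
    by (intros; rewrite test_fun_lin; auto; ring).
  rewrite RInt_plus', RInt_scal'; try ring; apply ex_RInt_01; intros; try apply cont_scal;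
    repeat (apply cont_mult; [|apply phi_cont]); apply cont_mult; apply test_fun_cont; auto.
Qed.

Lemma lead_form_lin_r K p f g h a : test_fun f -> test_fun g -> test_fun h ->
  lead_form K p h (fun x => a * f x + g x) = a * lead_form K p h f + lead_form K p h g.
Proof.
  intros Hf Hg Hh. unfold lead_form, ip.
  rewrite (RInt_ext' _ (fun x => a * (Derive_n h (2*p-1) x * Derive_n f (2*p-1) x * phi 1 x * phi K x)
                          + Derive_n h (2*p-1) x * Derive_n g (2*p-1) x * phi 1 x * phi K x))
    by (intros; rewrite test_fun_lin; auto; ring).
  rewrite RInt_plus', RInt_scal'; try ring; apply ex_RInt_01; intros; try apply cont_scal;
    repeat (apply cont_mult; [|apply phi_cont]); apply cont_mult; apply test_fun_cont; auto.
Qed.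

Lemma Q_form_bilinear K p : (1 <= p)%nat -> bilinear_on test_fun (Q_form K p).
Proof.
  intros Hp a f g h Hf Hg Hh. unfold Q_form, A_form.
  rewrite lead_form_lin_l, lead_form_lin_r by auto.
  rewrite (Series_ext _ (fun j => a * (A_poly K p (lam (S j)) * c_pair K f h (S j))
                                  + A_poly K p (lam (S j)) * c_pair K g h (S j)))
    by (intros; rewrite c_pair_lin_l; auto; ring).
  rewrite (Series_ext (fun j => A_poly K p (lam (S j)) * c_pair K h _ (S j))
                      (fun j => a * (A_poly K p (lam (S j)) * c_pair K h f (S j))
                                + A_poly K p (lam (S j)) * c_pair K h g (S j)))
    by (intros; rewrite c_pair_lin_r; auto; ring).
  rewrite !Series_lin by (apply ex_series_A_poly; auto).
  split; ring.
Qed.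

Lemma Q_form_diag K p mu : test_fun mu ->
  A_Kp K p mu = ip (fun x => Derive_n mu (2*p-1) x ^ 2 * phi 1 x) (phi K) + Q_form K p mu mu.
Proof.
  intros Hmu. unfold Q_form, A_form, lead_form, A_Kp.
  rewrite (Series_ext _ _ (A_series_A_poly K p mu)).
  replace (ip (fun x => Derive_n mu (2*p-1) x ^ 2 * phi 1 x) (phi K))
    with (ip (fun x => Derive_n mu (2*p-1) x * Derive_n mu (2*p-1) x * phi 1 x) (phi K))
    by (unfold ip; apply RInt_ext'; intros; ring).
  ring.
Qed.

Lemma Q_form_dominated K p : (1 <= p)%nat ->
  dominated_by_H (2*p-2) (fun mu => Q_form K p mu mu).
Proof.
  intros Hp. destruct (A_poly_monic K p Hp) as [a Ha].
  assert (HQ : forall mu, test_fun mu -> Q_form K p mu mu =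
            fsum (fun n => a n * moment K mu mu n) (2*p-1)
            + (moment K mu mu (2*p-1) - ip (fun x => Derive_n mu (2*p-1) x ^ 2 * phi 1 x) (phi K))).
  { intros mu Hmu. unfold Q_form, A_form, lead_form.
    rewrite (is_series_unique _ _ (A_poly_series K p a mu mu Ha Hmu Hmu)).
    unfold ip. rewrite (RInt_ext' (fun x => Derive_n mu _ x * Derive_n mu _ x * phi 1 x * phi K x)
                          (fun x => Derive_n mu (2*p-1) x ^ 2 * phi 1 x * phi K x))
      by (intros; ring).
    ring. }
  replace (2*p-1)%nat with (S (2*p-2)) in HQ by lia.
  destruct (dominated_by_H_plus (2*p-2) _ _
              (dominated_by_H_fsum (fun n mu => a n * moment K mu mu n) (S (2*p-2)) (2*p-2)
                 (fun n Hn => dominated_by_H_scal _ (a n) _ (moment_low K n (2*p-2) ltac:(lia))))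
              (moment_top K (2*p-2))) as [C [HC HCb]].
  exists C. split; auto. intros mu Hmu. rewrite HQ; auto.
Qed.

Theorem propositionA3 (K : nat) (HK : (1 <= K)%nat) :
  forall p : nat, (1 <= p)%nat ->
  exists (C : R) (Q : (R -> R) -> R),
    0 < C /\ quadratic_form_on test_fun Q /\
    forall mu : R -> R, test_fun mu ->
      ex_series (A_series K p mu) /\
      A_Kp K p mu =
        ip (fun x => (Derive_n mu (2 * p - 1) x) ^ 2 * phi 1 x) (phi K) + Q mu /\
      Rabs (Q mu) <= C * Hnorm2 (2 * p - 2) mu.
Proof.
  intros p Hp.
  destruct (Q_form_dominated K p Hp) as [C [HC HQ]].
  exists (C + 1), (fun mu => Q_form K p mu mu).
  split; [lra|]. split.
  - exists (Q_form K p). split; [apply Q_form_bilinear; auto | reflexivity].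
  - intros mu Hmu. split; [|split].
    + destruct (ex_series_A_poly K p mu mu Hp Hmu Hmu) as [l Hl].
      exists l. eapply is_series_ext'; [|apply Hl]. intros; symmetry; apply A_series_A_poly.
    + apply Q_form_diag; auto.
    + eapply Rle_trans; [apply HQ; auto|].
      pose proof (Hnorm2_nonneg mu (2*p-2) Hmu). nra.
Qed.
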